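(* Let $(u,v)$ be the solution of (1.1) with initial data satisfying $(H_\infty)$, and assume condition (3.1) holds for some constants $c_1>\tilde c_1\ge 2$. Then: (i) $w^*$ is upper semicontinuous and is a viscosity subsolution of $\min\{\partial_t w+H_1(t,x,\partial_x w),\,w\}=0$ in $(0,\infty)\times\mathbb{R}$; (ii) $w_*$ is lower semicontinuous and is a viscosity supersolution of $\min\{\partial_t w+H_2(t,x,\partial_x w),\,w\}=0$ in $(0,\infty)\times\mathbb{R}$; moreover $w^*(0,x)=w_*(0,x)=0$ for all $x<0$ and $w_*(0,x)=+\infty$ for all $x>0$.
   Context: System (1.1): $\partial_t u-\partial_{xx}u=u(1-u-av)$, $\partial_t v-d\,\partial_{xx}v=rv(1-bu-v)$ on $(0,\infty)\times\mathbb{R}$ with data $u_0,v_0$, where $d,r>0$, $a,b\in(0,1)$. Hypothesis $(H_\infty)$: $u_0,v_0\in C(\mathbb{R};[0,1])$; there exist $\theta_0>0$, $x_0>0$ with $\theta_0\le u_0\le1$ on $(-\infty,0]$ and $u_0=0$ on $[x_0,\infty)$; $v_0\not\equiv0$ has compact support. Rescalings: $u^\epsilon(t,x)=u(t/\epsilon,x/\epsilon)$, $v^\epsilon(t,x)=v(t/\epsilon,x/\epsilon)$, $w^\epsilon=-\epsilon\log u^\epsilon$. Condition (3.1): for all $(t,x)\in(0,\infty)\times\mathbb{R}$, $\chi_{\{\tilde c_1t<x<c_1t\}}\le\liminf_{\epsilon\to0,(t',x')\to(t,x)}v^\epsilon(t',x')\le\limsup_{\epsilon\to0,(t',x')\to(t,x)}v^\epsilon(t',x')\le\chi_{\{x\le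 c_1t\}}$. Half-relaxed limits: $w^*(t,x)=\limsup_{\epsilon\to0,(t',x')\to(t,x)}w^\epsilon(t',x')$, $w_*(t,x)=\liminf_{\epsilon\to0,(t',x')\to(t,x)}w^\epsilon(t',x')$ (with $(t',x')\in[0,\infty)\times\mathbb{R}$). Hamiltonians: $H_1(t,x,p)=|p|^2+1-a\chi_{\{x\le c_1t\}}$, $H_2(t,x,p)=|p|^2+1-a\chi_{\{\tilde c_1t<x<c_1t\}}$; $\chi_S$ denotes the indicator function of $S$. *)

From Stdlib Require Import Reals Lra.
Open Scope R_scope.

Inductive Rbar : Type := Finite (r : R) | p_infty | m_infty.

Definition Rbar_lt (x y : Rbar) : Prop :=
  match x, y with
  | Finite a, Finite b => a < b
  | m_infty, p_infty => True
  | m_infty, Finite _ => True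
  | Finite _, p_infty => True
  | _, _ => False
  end.

Definition Rbar_le (x y : Rbar) : Prop :=
  match x, y with
  | Finite a, Finite b => a <= b
  | m_infty, _ => True
  | _, p_infty => True
  | _, _ => False
  end.

Definition Rbar_addr (x : Rbar) (c : R) : Rbar :=
  match x with
  | Finite a => Finite (a + c)
  | p_infty => p_infty
  | m_infty => m_infty
  end.

Definition cont2_on (P : R -> R -> Prop) (f : R -> R -> R) : Prop :=
  forall t x, P t x -> forall eps, 0 < eps -> exists delta, 0 < delta /\
    forall t' x', P t' x' -> Rabs (t' - t) < delta -> Rabs (x' - x) < delta ->
      Rabs (f t' x' - f t x) < eps.

Definition closed_half (t x : R) : Prop := 0 <= t.
Definition open_half (t x : R) : Prop := 0 < t.

Definition classical_C12 (z : R -> R -> R) (zt zx zxx : R -> R -> R) : Prop :=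
  cont2_on closed_half z /\
  cont2_on open_half zt /\ cont2_on open_half zx /\ cont2_on open_half zxx /\
  (forall t x, 0 < t ->
     derivable_pt_lim (fun s => z s x) t (zt t x) /\
     derivable_pt_lim (fun y => z t y) x (zx t x) /\
     derivable_pt_lim (fun y => zx t y) x (zxx t x)).

Definition is_solution_11 (d r a b : R) (u0 v0 : R -> R) (u v : R -> R -> R) : Prop :=
  (exists B, forall t x, 0 <= t -> Rabs (u t x) <= B /\ Rabs (v t x) <= B) /\
  (forall x, u 0 x = u0 x /\ v 0 x = v0 x) /\
  exists ut ux uxx vt vx vxx : R -> R -> R,
    classical_C12 u ut ux uxx /\ classical_C12 v vt vx vxx /\
    forall t x, 0 < t ->
      ut t x - uxx t x = u t x * (1 - u t x - a * v t x) /\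
      vt t x - d * vxx t x = r * v t x * (1 - b * u t x - v t x).

Definition H_inf (u0 v0 : R -> R) : Prop :=
  continuity u0 /\ continuity v0 /\
  (forall x, 0 <= u0 x <= 1 /\ 0 <= v0 x <= 1) /\
  (exists theta0 x0, 0 < theta0 /\ 0 < x0 /\
     (forall x, x <= 0 -> theta0 <= u0 x <= 1) /\
     (forall x, x0 <= x -> u0 x = 0)) /\
  (exists x, v0 x <> 0) /\
  (exists K, forall x, K < Rabs x -> v0 x = 0).

Definition resc (z : R -> R -> R) (e t x : R) : R := z (t / e) (x / e).

(** w^eps = - eps log u^eps  (= +oo where u^eps <= 0). *)
Definition weps (u : R -> R -> R) (e t x : R) : Rbar :=
  if Rlt_dec 0 (resc u e t x) then Finite (- e * ln (resc u e t x)) else p_infty.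

(** Half-relaxed limits: L = limsup_{eps->0+, (t',x')->(t,x), t'>=0} f eps t' x'. *)
Definition hr_limsup (f : R -> R -> R -> Rbar) (t x : R) (L : Rbar) : Prop :=
  (forall M : R, Rbar_lt L (Finite M) -> exists delta, 0 < delta /\
     forall e t' x', 0 < e < delta -> 0 <= t' -> Rabs (t' - t) < delta ->
       Rabs (x' - x) < delta -> Rbar_lt (f e t' x') (Finite M)) /\
  (forall M : R, Rbar_lt (Finite M) L -> forall delta, 0 < delta ->
     exists e t' x', 0 < e < delta /\ 0 <= t' /\ Rabs (t' - t) < delta /\
       Rabs (x' - x) < delta /\ Rbar_lt (Finite M) (f e t' x')).

Definition hr_liminf (f : R -> R -> R -> Rbar) (t x : R) (L : Rbar) : Prop :=
  (forall M : R, Rbar_lt (Finite M) L -> exists delta, 0 < delta /\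
     forall e t' x', 0 < e < delta -> 0 <= t' -> Rabs (t' - t) < delta ->
       Rabs (x' - x) < delta -> Rbar_lt (Finite M) (f e t' x')) /\
  (forall M : R, Rbar_lt L (Finite M) -> forall delta, 0 < delta ->
     exists e t' x', 0 < e < delta /\ 0 <= t' /\ Rabs (t' - t) < delta /\
       Rabs (x' - x) < delta /\ Rbar_lt (f e t' x') (Finite M)).

Definition chi_le (c1 t x : R) : R := if Rle_dec x (c1 * t) then 1 else 0.
Definition chi_between (ct1 c1 t x : R) : R :=
  if Rlt_dec (ct1 * t) x then (if Rlt_dec x (c1 * t) then 1 else 0) else 0.

Definition cond31 (v : R -> R -> R) (c1 ct1 : R) : Prop :=
  forall t x, 0 < t -> forall l L : Rbar,
    hr_liminf (fun e t' x' => Finite (resc v e t' x')) t x l ->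
    hr_limsup (fun e t' x' => Finite (resc v e t' x')) t x L ->
    Rbar_le (Finite (chi_between ct1 c1 t x)) l /\ Rbar_le l L /\
    Rbar_le L (Finite (chi_le c1 t x)).

Definition H1 (a c1 t x p : R) : R := p ^ 2 + 1 - a * chi_le c1 t x.
Definition H2 (a c1 ct1 t x p : R) : R := p ^ 2 + 1 - a * chi_between ct1 c1 t x.

Definition usc_on_closed_half (w : R -> R -> Rbar) : Prop :=
  forall t0 x0, 0 <= t0 -> forall M : R, Rbar_lt (w t0 x0) (Finite M) ->
    exists delta, 0 < delta /\ forall t x, 0 <= t -> Rabs (t - t0) < delta ->
      Rabs (x - x0) < delta -> Rbar_lt (w t x) (Finite M).

Definition lsc_on_closed_half (w : R -> R -> Rbar) : Prop :=
  forall t0 x0, 0 <= t0 -> forall M : R, Rbar_lt (Finite M) (w t0 x0) ->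
    exists delta, 0 < delta /\ forall t x, 0 <= t -> Rabs (t - t0) < delta ->
      Rabs (x - x0) < delta -> Rbar_lt (Finite M) (w t x).

Definition C1_test (phi phit phix : R -> R -> R) : Prop :=
  cont2_on open_half phi /\ cont2_on open_half phit /\ cont2_on open_half phix /\
  forall t x, 0 < t ->
    derivable_pt_lim (fun s => phi s x) t (phit t x) /\
    derivable_pt_lim (fun y => phi t y) x (phix t x).

(** Viscosity subsolution of  min{ w_t + H(t,x,w_x), w } = 0  in (0,oo) x R. *)
Definition visc_subsol (H : R -> R -> R -> R) (w : R -> R -> Rbar) : Prop :=
  forall phi phit phix t0 x0, C1_test phi phit phix -> 0 < t0 ->
    (exists rho, 0 < rho /\ forall t x, 0 < t -> Rabs (t - t0) < rho ->
        Rabs (x - x0) < rho ->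
        Rbar_le (w t x) (Rbar_addr (w t0 x0) (phi t x - phi t0 x0))) ->
    phit t0 x0 + H t0 x0 (phix t0 x0) <= 0 \/ Rbar_le (w t0 x0) (Finite 0).

(** Viscosity supersolution of  min{ w_t + H(t,x,w_x), w } = 0  in (0,oo) x R. *)
Definition visc_supersol (H : R -> R -> R -> R) (w : R -> R -> Rbar) : Prop :=
  forall phi phit phix t0 x0, C1_test phi phit phix -> 0 < t0 ->
    (exists rho, 0 < rho /\ forall t x, 0 < t -> Rabs (t - t0) < rho ->
        Rabs (x - x0) < rho ->
        Rbar_le (Rbar_addr (w t0 x0) (phi t x - phi t0 x0)) (w t x)) ->
    0 <= phit t0 x0 + H t0 x0 (phix t0 x0) /\ Rbar_le (Finite 0) (w t0 x0).

From Stdlib Require Import Reals Lra Psatz Classical ClassicalEpsilon.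
From Coquelicot Require Compactness.
Open Scope R_scope.

(** 1. Real-analysis toolkit: compactness of rectangles (Cousin's lemma), hence
       uniform continuity and the extreme value theorem in (t,x); first- and
       second-order conditions at maxima of functions of one variable.
    2. Barriers for u: a maximum principle on [0,oo) x R gives u >= 0, the
       exponential upper barrier exp(lam (x0 - x) + (lam^2 + C) t) and a
       travelling cos^2-wave lower barrier.
    3. Half-relaxed limits: eventual bounds, semicontinuity, and, through the
       barriers, the initial values and local bounds of w^e.
    4. Perturbed test functions: at a contact point the test function is
       replaced by a cone, the cone by a smooth penalty g, and s (w^e - g)
       (s = +1 or -1) is maximized over a small square.  At the interior
       maximum the log-transformed equation w_t - e w_xx + w_x^2 + 1 - u^e - a v^e = 0
       yields the Hamiltonian inequality, with v^e controlled by (3.1) and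
       u^e exponentially small where w^e stays positive. *)

Lemma derivable_pt_lim_val f x l l' : l = l' -> derivable_pt_lim f x l -> derivable_pt_lim f x l'.
Proof. now intros ->. Qed.

Lemma derivable_pt_lim_ball_ext f g x l r : 0 < r -> (forall y, Rabs (y - x) < r -> f y = g y) ->
  derivable_pt_lim f x l -> derivable_pt_lim g x l.
Proof.
  intros Hr Hfg. apply (derivable_pt_lim_locally_ext f g x (x - r) (x + r)); [lra|].
  intros z Hz. apply Hfg. unfold Rabs; destruct Rcase_abs; lra.
Qed.

Lemma derivable_lim_continuous f c l : derivable_pt_lim f c l -> continuity_pt f c.
Proof. intro H. apply derivable_continuous_pt. exists l. exact H. Qed.

Lemma derivable_pt_lim_exp_affine A k s :
  derivable_pt_lim (fun y => exp (A + k * y)) s (k * exp (A + k * s)).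
Proof.
  apply (derivable_pt_lim_val _ _ (exp (A + k * s) * (0 + k * 1))); [ring|].
  apply (derivable_pt_lim_comp (fun y => A + k * y) exp).
  - apply derivable_pt_lim_plus; [apply derivable_pt_lim_const|].
    apply derivable_pt_lim_scal, derivable_pt_lim_id.
  - apply derivable_pt_lim_exp.
Qed.

Lemma derivable_pt_lim_exp_linear K t : derivable_pt_lim (fun s => exp (K * s)) t (K * exp (K * t)).
Proof.
  apply (derivable_pt_lim_ext (fun s => exp (0 + K * s))); [intro; f_equal; ring|].
  replace (K * exp (K * t)) with (K * exp (0 + K * t)) by (f_equal; f_equal; ring).
  apply derivable_pt_lim_exp_affine.
Qed.

Lemma exp_continuous t : continuity_pt exp t.
Proof. exact (derivable_lim_continuous _ _ _ (derivable_pt_lim_exp t)). Qed.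

Lemma exp_neg_le_1 K t : 0 <= K -> 0 <= t -> exp (- K * t) <= 1.
Proof.
  intros HK Ht. rewrite <- exp_0. destruct (Req_dec (K * t) 0) as [H0|H0].
  - replace (- K * t) with 0 by lra. lra.
  - left. apply exp_increasing. nra.
Qed.

Lemma Rdiv_nonneg a b : 0 <= a -> 0 < b -> 0 <= a / b.
Proof. intros. unfold Rdiv. apply Rmult_le_pos; [lra | left; apply Rinv_0_lt_compat; lra]. Qed.

Lemma Rabs_le_bounds a b : Rabs a <= b -> - b <= a <= b.
Proof. unfold Rabs. destruct Rcase_abs; intros; split; lra. Qed.

Lemma exists_pos_below3 a b c : 0 < a -> 0 < b -> 0 < c -> exists r, 0 < r /\ r < a /\ r < b /\ r < c.
Proof.
  intros Ha Hb Hc. exists (Rmin a (Rmin b c) / 2).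
  pose proof (Rmin_l a (Rmin b c)). pose proof (Rmin_r a (Rmin b c)).
  pose proof (Rmin_l b c). pose proof (Rmin_r b c).
  assert (0 < Rmin a (Rmin b c)) by (repeat apply Rmin_glb_lt; auto). lra.
Qed.

Lemma exists_pos_below4 a b c d : 0 < a -> 0 < b -> 0 < c -> 0 < d ->
  exists r, 0 < r /\ r < a /\ r < b /\ r < c /\ r < d.
Proof.
  intros Ha Hb Hc Hd. destruct (exists_pos_below3 a b (Rmin c d) Ha Hb ltac:(apply Rmin_glb_lt; auto))
    as [r [Hr [Hra [Hrb Hrcd]]]].
  pose proof (Rmin_l c d). pose proof (Rmin_r c d). exists r. lra.
Qed.

(** Signs s = +-1, used to treat maxima and minima together. *)
Lemma sign_sq s : s = 1 \/ s = -1 -> s * s = 1.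
Proof. intros [-> | ->]; ring. Qed.

Lemma sign_abs_mul s y : s = 1 \/ s = -1 -> Rabs (s * y) = Rabs y.
Proof.
  intros [-> | ->]; [now rewrite Rmult_1_l|].
  replace (-1 * y) with (- y) by ring. apply Rabs_Ropp.
Qed.

Lemma continuity_pt_intro (g : R -> R) c :
  (forall eps, 0 < eps -> exists d, 0 < d /\ forall y, Rabs (y - c) < d -> Rabs (g y - g c) < eps) ->
  continuity_pt g c.
Proof.
  intros H eps Heps. destruct (H eps Heps) as [d [Hd Hd2]].
  exists d. split; auto. intros y [_ Hy]. apply Hd2. exact Hy.
Qed.

Lemma continuity_pt_elim (h : R -> R) c : continuity_pt h c ->
  forall eps, 0 < eps -> exists d, 0 < d /\ forall y, Rabs (y - c) < d -> Rabs (h y - h c) < eps.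
Proof.
  intros Hh eps He. destruct (Hh eps He) as [d [Hd Hd2]]. exists d. split; auto.
  intros y Hy. destruct (Req_dec y c) as [->|Hne]. { rewrite Rminus_diag, Rabs_R0; auto. }
  apply (Hd2 y). split; [split; [constructor | auto] | exact Hy].
Qed.

(** Compactness of a closed rectangle (Cousin's lemma, from Coquelicot): every
    positive gauge admits a Lebesgue number.  This is the only source of
    compactness in the development. *)
Lemma cousin_rectangle (a1 b1 a2 b2 : R) (delta : R -> R -> R) :
  (forall t s, 0 < delta t s) ->
  exists d, 0 < d /\ forall x y, a1 <= x <= b1 -> a2 <= y <= b2 ->
    exists t s, a1 <= t <= b1 /\ a2 <= s <= b2 /\ Rabs (x - t) < delta t s /\
      Rabs (y - s) < delta t s /\ d <= delta t s.
Proof.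
  intros Hd.
  pose (gauge := fun z : Compactness.Tn 2 R =>
    match z with (t, (s, _)) => mkposreal (delta t s) (Hd t s) end).
  destruct (Compactness.compactness_value 2 (a1, (a2, tt)) (b1, (b2, tt)) gauge) as [d Hdd].
  exists (pos d). split; [apply cond_pos|].
  intros x y Hx Hy. specialize (Hdd (x, (y, tt))). simpl in Hdd.
  apply NNPP. intro Hn. apply Hdd; [tauto|]. intros [[t [s []]] [Hb [Hc Hle]]].
  apply Hn. exists t, s. simpl in *. tauto.
Qed.

Lemma choice2 {A B C : Type} (P : A -> B -> C -> Prop) :
  (forall a b, exists c, P a b c) -> exists f, forall a b, P a b (f a b).
Proof.
  intro H.
  destruct (choice (fun (ab : A * B) c => P (fst ab) (snd ab) c)) as [g Hg].
  { intros [a b]. apply H. }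
  exists (fun a b => g (a, b)). intros a b. apply (Hg (a, b)).
Qed.

Definition box (a1 b1 a2 b2 t x : R) := a1 <= t <= b1 /\ a2 <= x <= b2.

Definition cont_box (a1 b1 a2 b2 : R) (f : R -> R -> R) : Prop :=
  forall t x, box a1 b1 a2 b2 t x -> forall eps, 0 < eps -> exists delta, 0 < delta /\
    forall t' x', box a1 b1 a2 b2 t' x' -> Rabs (t' - t) < delta -> Rabs (x' - x) < delta ->
      Rabs (f t' x' - f t x) < eps.

Lemma cont_box_uniform a1 b1 a2 b2 f : cont_box a1 b1 a2 b2 f ->
  forall eps, 0 < eps -> exists d, 0 < d /\ forall t x t' x',
    box a1 b1 a2 b2 t x -> box a1 b1 a2 b2 t' x' -> Rabs (t' - t) < d -> Rabs (x' - x) < d ->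
      Rabs (f t' x' - f t x) < eps.
Proof.
  intros Hc eps Heps.
  assert (H : forall t x, exists dl, 0 < dl /\ (box a1 b1 a2 b2 t x ->
    forall t' x', box a1 b1 a2 b2 t' x' -> Rabs (t' - t) < dl -> Rabs (x' - x) < dl ->
      Rabs (f t' x' - f t x) < eps/2)).
  { intros t x. destruct (classic (box a1 b1 a2 b2 t x)) as [Hb|Hb].
    - destruct (Hc t x Hb (eps/2)) as [dl [Hdl Hdl2]]; [lra|]. exists dl; split; auto.
    - exists 1. split; [lra | tauto]. }
  destruct (choice2 _ H) as [G HG].
  destruct (cousin_rectangle a1 b1 a2 b2 (fun t s => G t s / 2)) as [d [Hd Hd2]].
  { intros t s. destruct (HG t s). lra. }
  exists d. split; auto.
  intros t x t' x' [Hb1 Hb2] Hb' Ht Hx.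
  destruct (Hd2 t x Hb1 Hb2) as [c [s [Hc1 [Hs1 [Hct [Hcs Hle]]]]]].
  destruct (HG c s) as [Hpos Hcl].
  assert (Hbc : box a1 b1 a2 b2 c s) by (split; auto).
  assert (A1 := Hcl Hbc t x (conj Hb1 Hb2) ltac:(lra) ltac:(lra)).
  assert (A2 := Hcl Hbc t' x' Hb').
  assert (Ht' : Rabs (t' - c) < G c s).
  { replace (t' - c) with ((t' - t) + (t - c)) by ring. eapply Rle_lt_trans; [apply Rabs_triang | lra]. }
  assert (Hx' : Rabs (x' - s) < G c s).
  { replace (x' - s) with ((x' - x) + (x - s)) by ring. eapply Rle_lt_trans; [apply Rabs_triang | lra]. }
  specialize (A2 Ht' Hx').
  replace (f t' x' - f t x) with ((f t' x' - f c s) - (f t x - f c s)) by ring.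
  eapply Rle_lt_trans; [apply Rabs_triang|]. rewrite Rabs_Ropp. lra.
Qed.

(** Clamping onto [a,b]: a 1-Lipschitz retraction, used to extend functions
    defined on an interval to the whole line. *)
Definition clamp (a b x : R) := Rmax a (Rmin b x).

Lemma clamp_in a b x : a <= b -> a <= clamp a b x <= b.
Proof. intros. unfold clamp, Rmax, Rmin. repeat destruct Rle_dec; lra. Qed.

Lemma clamp_id a b x : a <= x <= b -> clamp a b x = x.
Proof. intros. unfold clamp, Rmax, Rmin. repeat destruct Rle_dec; lra. Qed.

Lemma clamp_lip a b x y : a <= b -> Rabs (clamp a b x - clamp a b y) <= Rabs (x - y).
Proof. intros. unfold clamp, Rmax, Rmin. repeat destruct Rle_dec; unfold Rabs; repeat destruct Rcase_abs; lra. Qed.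

Lemma clamp_continuous a b x : a <= b -> continuity_pt (clamp a b) x.
Proof.
  intro H. apply continuity_pt_intro. intros eps He. exists eps. split; auto.
  intros y Hy. eapply Rle_lt_trans; [apply clamp_lip; auto | auto].
Qed.

(** Extreme value theorem on a rectangle: maximize first in x for each t,
    then the (uniformly continuous) partial maximum in t. *)
Lemma cont_box_argmax a1 b1 a2 b2 f : a1 <= b1 -> a2 <= b2 -> cont_box a1 b1 a2 b2 f ->
  exists t x, box a1 b1 a2 b2 t x /\ forall t' x', box a1 b1 a2 b2 t' x' -> f t' x' <= f t x.
Proof.
  intros H1 H2 Hc.
  assert (Hu := cont_box_uniform _ _ _ _ _ Hc).
  assert (Hx : forall t, exists xm, (a1 <= t <= b1 -> a2 <= xm <= b2 /\
     forall x, a2 <= x <= b2 -> f t x <= f t xm)).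
  { intro t. destruct (classic (a1 <= t <= b1)) as [Ht|Ht]; [|exists a2; tauto].
    destruct (continuity_ab_maj (fun x => f t (clamp a2 b2 x)) a2 b2 H2) as [xm [Hm1 Hm2]].
    { intros c Hcc. apply continuity_pt_intro. intros eps Heps.
      destruct (Hu eps Heps) as [d [Hd Hd2]]. exists d. split; auto.
      intros y Hy. apply Hd2; try (split; auto; apply clamp_in; auto).
      - rewrite Rminus_diag, Rabs_R0; auto.
      - eapply Rle_lt_trans; [apply clamp_lip; auto | auto]. }
    exists xm. intros _. split; auto. intros x Hxx.
    specialize (Hm1 x Hxx). rewrite (clamp_id _ _ x Hxx), (clamp_id _ _ xm Hm2) in Hm1. exact Hm1. }
  destruct (choice _ Hx) as [xm Hxm].
  pose (m := fun t => f (clamp a1 b1 t) (xm (clamp a1 b1 t))).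
  destruct (continuity_ab_maj m a1 b1 H1) as [tm [Htm1 Htm2]].
  { intros c Hcc. apply continuity_pt_intro. intros eps Heps.
    destruct (Hu (eps/2)) as [d [Hd Hd2]]; [lra|]. exists d. split; auto.
    intros y Hy. unfold m.
    set (p := clamp a1 b1 y). set (q := clamp a1 b1 c).
    assert (Hp : a1 <= p <= b1) by (apply clamp_in; auto).
    assert (Hq : a1 <= q <= b1) by (apply clamp_in; auto).
    assert (Hpq : Rabs (p - q) < d) by (eapply Rle_lt_trans; [apply clamp_lip; auto | auto]).
    destruct (Hxm p Hp) as [Hxp Hfp]. destruct (Hxm q Hq) as [Hxq Hfq].
    assert (A := Hfp (xm q) Hxq). assert (B := Hfq (xm p) Hxp).
    assert (C := Hd2 q (xm q) p (xm q) (conj Hq Hxq) (conj Hp Hxq) Hpq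
      ltac:(rewrite Rminus_diag, Rabs_R0; auto)).
    assert (D := Hd2 p (xm p) q (xm p) (conj Hp Hxp) (conj Hq Hxp)
      ltac:(rewrite <- Rabs_Ropp; replace (-(q-p)) with (p-q) by ring; auto)
      ltac:(rewrite Rminus_diag, Rabs_R0; auto)).
    revert A B C D. unfold Rabs. repeat destruct Rcase_abs; lra. }
  exists tm, (xm tm). destruct (Hxm tm Htm2) as [Hx1 Hx2]. split; [split; auto|].
  intros t' x' [Ht' Hx'].
  specialize (Htm1 t' Ht'). unfold m in Htm1. rewrite !clamp_id in Htm1 by auto.
  eapply Rle_trans; [|exact Htm1]. apply (proj2 (Hxm t' Ht')). exact Hx'.
Qed.

Lemma cont_box_ext a1 b1 a2 b2 f g : (forall t x, f t x = g t x) ->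
  cont_box a1 b1 a2 b2 f -> cont_box a1 b1 a2 b2 g.
Proof.
  intros H Hf t x Hb eps He. destruct (Hf t x Hb eps He) as [d [Hd H2]].
  exists d. split; [auto|]. intros. rewrite <- !H. auto.
Qed.

Lemma cont_box_const a1 b1 a2 b2 c : cont_box a1 b1 a2 b2 (fun _ _ => c).
Proof. intros t x _ eps He. exists 1. split; [lra|]. intros. rewrite Rminus_diag, Rabs_R0. auto. Qed.

Lemma cont_box_add a1 b1 a2 b2 f g : cont_box a1 b1 a2 b2 f -> cont_box a1 b1 a2 b2 g ->
  cont_box a1 b1 a2 b2 (fun t x => f t x + g t x).
Proof.
  intros Hf Hg t x Hb eps He.
  destruct (Hf t x Hb (eps/2)) as [d1 [Hd1 H1]]; [lra|].
  destruct (Hg t x Hb (eps/2)) as [d2 [Hd2 H2]]; [lra|].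
  exists (Rmin d1 d2). split; [apply Rmin_glb_lt; auto|].
  intros t' x' Hb' Ht Hx.
  pose proof (Rmin_l d1 d2). pose proof (Rmin_r d1 d2).
  specialize (H1 t' x' Hb' ltac:(lra) ltac:(lra)). specialize (H2 t' x' Hb' ltac:(lra) ltac:(lra)).
  replace (f t' x' + g t' x' - (f t x + g t x)) with ((f t' x' - f t x) + (g t' x' - g t x)) by ring.
  eapply Rle_lt_trans; [apply Rabs_triang | lra].
Qed.

Lemma cont_box_mul a1 b1 a2 b2 f g : cont_box a1 b1 a2 b2 f -> cont_box a1 b1 a2 b2 g ->
  cont_box a1 b1 a2 b2 (fun t x => f t x * g t x).
Proof.
  intros Hf Hg t x Hb eps He.
  set (A := Rabs (f t x) + 1). set (Bg := Rabs (g t x) + 1).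
  assert (HA : 0 < A) by (unfold A; pose proof (Rabs_pos (f t x)); lra).
  assert (HB : 0 < Bg) by (unfold Bg; pose proof (Rabs_pos (g t x)); lra).
  destruct (Hf t x Hb (eps/(2*Bg))) as [d1 [Hd1 H1]]; [apply Rdiv_lt_0_compat; lra|].
  destruct (Hg t x Hb (Rmin 1 (eps/(2*A)))) as [d2 [Hd2 H2]].
  { apply Rmin_glb_lt; [lra | apply Rdiv_lt_0_compat; lra]. }
  exists (Rmin d1 d2). split; [apply Rmin_glb_lt; auto|].
  intros t' x' Hb' Ht Hx.
  pose proof (Rmin_l d1 d2). pose proof (Rmin_r d1 d2).
  specialize (H1 t' x' Hb' ltac:(lra) ltac:(lra)). specialize (H2 t' x' Hb' ltac:(lra) ltac:(lra)).
  pose proof (Rmin_l 1 (eps/(2*A))). pose proof (Rmin_r 1 (eps/(2*A))).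
  replace (f t' x' * g t' x' - f t x * g t x)
    with ((f t' x' - f t x) * g t' x' + f t x * (g t' x' - g t x)) by ring.
  eapply Rle_lt_trans; [apply Rabs_triang|]. rewrite !Rabs_mult.
  assert (Hg' : Rabs (g t' x') <= Bg).
  { unfold Bg. replace (g t' x') with (g t x + (g t' x' - g t x)) by ring.
    eapply Rle_trans; [apply Rabs_triang | lra]. }
  assert (E1 : Rabs (f t' x' - f t x) * Rabs (g t' x') <= eps/(2*Bg) * Bg).
  { apply Rmult_le_compat; try apply Rabs_pos; lra. }
  assert (E2 : Rabs (f t x) * Rabs (g t' x' - g t x) < A * (eps/(2*A))).
  { apply Rle_lt_trans with (Rabs (f t x) * (eps/(2*A))).
    - apply Rmult_le_compat_l; [apply Rabs_pos | lra].
    - apply Rmult_lt_compat_r; [apply Rdiv_lt_0_compat; lra | unfold A; lra]. }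
  replace (eps/(2*Bg) * Bg) with (eps/2) in E1 by (field; lra).
  replace (A * (eps/(2*A))) with (eps/2) in E2 by (field; lra).
  lra.
Qed.

Lemma cont_box_sub a1 b1 a2 b2 f g : cont_box a1 b1 a2 b2 f -> cont_box a1 b1 a2 b2 g ->
  cont_box a1 b1 a2 b2 (fun t x => f t x - g t x).
Proof.
  intros Hf Hg. apply (cont_box_ext _ _ _ _ (fun t x => f t x + (fun _ _ => -1) t x * g t x)).
  { intros; ring. }
  apply cont_box_add; auto. apply cont_box_mul; auto. apply cont_box_const.
Qed.

Lemma cont_box_comp a1 b1 a2 b2 (h : R -> R) f : (forall z, continuity_pt h z) ->
  cont_box a1 b1 a2 b2 f -> cont_box a1 b1 a2 b2 (fun t x => h (f t x)).
Proof.
  intros Hh Hf t x Hb eps He. destruct (continuity_pt_elim h _ (Hh (f t x)) eps He) as [d [Hd H2]].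
  destruct (Hf t x Hb d Hd) as [d' [Hd' H3]]. exists d'. split; [auto|]. intros. apply H2. apply H3; auto.
Qed.

Lemma cont_box_t a1 b1 a2 b2 (h : R -> R) : (forall t, continuity_pt h t) ->
  cont_box a1 b1 a2 b2 (fun t _ => h t).
Proof.
  intros Hh t x _ eps He. destruct (continuity_pt_elim h t (Hh t) eps He) as [d [Hd Hd2]].
  exists d. split; [auto|]. intros t' x' _ Ht _. apply Hd2. exact Ht.
Qed.

Lemma cont_box_x a1 b1 a2 b2 (h : R -> R) : (forall t, continuity_pt h t) ->
  cont_box a1 b1 a2 b2 (fun _ x => h x).
Proof.
  intros Hh t x _ eps He. destruct (continuity_pt_elim h x (Hh x) eps He) as [d [Hd Hd2]].
  exists d. split; [auto|]. intros t' x' _ _ Hx. apply Hd2. exact Hx.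
Qed.

Lemma cont_box_comp_affine a1 b1 a2 b2 (h : R -> R) p q r0 : (forall z, continuity_pt h z) ->
  cont_box a1 b1 a2 b2 (fun t x => h (p * t + q * x + r0)).
Proof.
  intros Hh. apply (cont_box_comp _ _ _ _ h (fun t x => p * t + q * x + r0) Hh).
  apply cont_box_add; [|apply cont_box_const].
  apply cont_box_add; [apply (cont_box_t _ _ _ _ (fun t => p * t)) | apply (cont_box_x _ _ _ _ (fun x => q * x))];
    intro z; eapply derivable_lim_continuous; apply derivable_pt_lim_scal, derivable_pt_lim_id.
Qed.

Lemma cont_box_of_cont2 (P : R -> R -> Prop) a1 b1 a2 b2 f :
  (forall t x, box a1 b1 a2 b2 t x -> P t x) -> cont2_on P f -> cont_box a1 b1 a2 b2 f.
Proof.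
  intros HP Hf t x Hb eps He. destruct (Hf t x (HP _ _ Hb) eps He) as [d [Hd H]].
  exists d. split; [auto|]. intros. apply H; auto.
Qed.

Lemma cont2_of_box (f : R -> R -> R) :
  (forall a, 0 < a -> cont_box 0 a (-a) a f) -> cont2_on closed_half f.
Proof.
  intros H t x Ht eps He. unfold closed_half in Ht.
  set (a := t + Rabs x + 1).
  assert (Ha : 0 < a) by (unfold a; pose proof (Rabs_pos x); lra).
  assert (Hb : box 0 a (-a) a t x) by (unfold box, a; unfold Rabs; destruct Rcase_abs; lra).
  destruct (H a Ha t x Hb eps He) as [d [Hd H2]].
  exists (Rmin d 1). split; [apply Rmin_glb_lt; lra|].
  intros t' x' Ht' Htt Hxx. unfold closed_half in Ht'.
  pose proof (Rmin_l d 1). pose proof (Rmin_r d 1).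
  apply H2; try lra. unfold box, a. revert Htt Hxx. unfold Rabs. repeat destruct Rcase_abs; lra.
Qed.

Lemma cont2_sub P f g : cont2_on P f -> cont2_on P g -> cont2_on P (fun t x => f t x - g t x).
Proof.
  intros Hf Hg t x Hp eps He.
  destruct (Hf t x Hp (eps/2)) as [d1 [Hd1 H1]]; [lra|].
  destruct (Hg t x Hp (eps/2)) as [d2 [Hd2 H2]]; [lra|].
  exists (Rmin d1 d2). split; [apply Rmin_glb_lt; auto|].
  intros t' x' Hp' Ht Hx.
  pose proof (Rmin_l d1 d2). pose proof (Rmin_r d1 d2).
  specialize (H1 t' x' Hp' ltac:(lra) ltac:(lra)). specialize (H2 t' x' Hp' ltac:(lra) ltac:(lra)).
  replace (f t' x' - g t' x' - (f t x - g t x)) with ((f t' x' - f t x) - (g t' x' - g t x)) by ring.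
  eapply Rle_lt_trans; [apply Rabs_triang|]. rewrite Rabs_Ropp. lra.
Qed.

Lemma cont_box_rescale a1 b1 a2 b2 (u : R -> R -> R) e : 0 < e -> 0 <= a1 ->
  cont2_on closed_half u -> cont_box a1 b1 a2 b2 (fun t x => u (t / e) (x / e)).
Proof.
  intros He Ha1 Hu t x [Ht Hx] eps Heps.
  destruct (Hu (t/e) (x/e) ltac:(unfold closed_half; apply Rdiv_nonneg; lra) eps Heps) as [d [Hd H]].
  assert (Hscale : forall y y', Rabs (y' - y) < d * e -> Rabs (y'/e - y/e) < d).
  { intros y y' Hy. replace (y'/e - y/e) with ((y' - y) * / e) by (field; lra).
    rewrite Rabs_mult, (Rabs_pos_eq (/e)) by (left; apply Rinv_0_lt_compat; auto).
    apply (Rmult_lt_reg_r e); auto. rewrite Rmult_assoc, Rinv_l by lra. lra. }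
  exists (d * e). split; [nra|]. intros t' x' [Ht' Hx'] Htt Hxx.
  apply H; auto. unfold closed_half. apply Rdiv_nonneg; lra.
Qed.

Lemma deriv_nonneg_at_left_max f c l r : 0 < r -> (forall y, c - r < y <= c -> f y <= f c) ->
  derivable_pt_lim f c l -> 0 <= l.
Proof.
  intros Hr Hm Hd. destruct (Rle_or_lt 0 l) as [|Hl]; auto. exfalso.
  destruct (Hd (-l)) as [d Hdd]; [lra|].
  set (h := - Rmin (d/2) (r/2)).
  assert (Hh1 : Rmin (d/2) (r/2) <= d/2) by apply Rmin_l.
  assert (Hh2 : Rmin (d/2) (r/2) <= r/2) by apply Rmin_r.
  assert (Hh0 : 0 < Rmin (d/2) (r/2)) by (apply Rmin_glb_lt; destruct d; simpl; lra).
  assert (Hhd : Rabs h < d) by (unfold h; rewrite Rabs_Ropp, Rabs_pos_eq; destruct d; simpl in *; lra).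
  specialize (Hdd h ltac:(unfold h; lra) Hhd).
  assert (Hf : f (c + h) <= f c) by (apply Hm; unfold h; lra).
  assert (Hq : 0 <= (f (c + h) - f c) / h).
  { unfold Rdiv. assert (/h < 0) by (apply Rinv_lt_0_compat; unfold h; lra). nra. }
  revert Hdd. unfold Rabs. destruct Rcase_abs; lra.
Qed.

Lemma deriv_nonpos_at_right_max f c l r : 0 < r -> (forall y, c <= y < c + r -> f y <= f c) ->
  derivable_pt_lim f c l -> l <= 0.
Proof.
  intros Hr Hm Hd.
  enough (0 <= - l) by lra.
  apply (deriv_nonneg_at_left_max (fun y => f (- y)) (- c) (- l) r Hr).
  - intros y Hy. replace (- - c) with c by ring. apply Hm. lra.
  - apply (derivable_pt_lim_val _ _ (l * (-1))); [ring|].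
    apply (derivable_pt_lim_comp (fun y => - y) f).
    + apply derivable_pt_lim_opp, derivable_pt_lim_id.
    + replace (- - c) with c by ring. exact Hd.
Qed.

Lemma deriv_zero_at_max f c l r : 0 < r -> (forall y, Rabs (y - c) < r -> f y <= f c) ->
  derivable_pt_lim f c l -> l = 0.
Proof.
  intros Hr Hm Hd. apply Rle_antisym.
  - eapply deriv_nonpos_at_right_max; eauto. intros y Hy. apply Hm. rewrite Rabs_pos_eq; lra.
  - eapply deriv_nonneg_at_left_max; eauto. intros y Hy. apply Hm. rewrite Rabs_left1; lra.
Qed.

Lemma second_deriv_nonpos_at_max f f' c l2 r : 0 < r -> (forall y, Rabs (y - c) < r -> f y <= f c) ->
  (forall y, Rabs (y - c) < r -> derivable_pt_lim f y (f' y)) ->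
  derivable_pt_lim f' c l2 -> l2 <= 0.
Proof.
  intros Hr Hm Hd Hd2. destruct (Rle_or_lt l2 0) as [|Hl]; auto. exfalso.
  assert (H0 : f' c = 0).
  { apply (deriv_zero_at_max f c (f' c) r Hr Hm). apply Hd. rewrite Rminus_diag, Rabs_R0; auto. }
  destruct (Hd2 l2) as [d Hdd]; [lra|].
  set (h := Rmin (d/2) (r/2)).
  assert (Hh : 0 < h) by (unfold h; apply Rmin_glb_lt; destruct d; simpl; lra).
  assert (Hhr : h <= r/2) by apply Rmin_r. assert (Hhd : h <= d/2) by apply Rmin_l.
  destruct (MVT_cor2 f f' c (c + h)) as [xi [Heq Hxi]]; [lra| |].
  { intros z Hz. apply Hd. rewrite Rabs_pos_eq; lra. }
  assert (Hpos : 0 < f' xi).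
  { specialize (Hdd (xi - c) ltac:(lra) ltac:(rewrite Rabs_pos_eq; destruct d; simpl in *; lra)).
    replace (c + (xi - c)) with xi in Hdd by ring. rewrite H0 in Hdd.
    assert (Hq : 0 < (f' xi - 0) / (xi - c)) by (revert Hdd; unfold Rabs; destruct Rcase_abs; lra).
    unfold Rdiv in Hq. assert (0 < / (xi - c)) by (apply Rinv_0_lt_compat; lra).
    destruct (Rle_or_lt (f' xi) 0); auto. nra. }
  assert (f (c + h) <= f c) by (apply Hm; rewrite Rabs_pos_eq; lra).
  nra.
Qed.

Definition heat_data (D Dt Dx Dxx : R -> R -> R) (t x : R) : Prop :=
  derivable_pt_lim (fun s => D s x) t (Dt t x) /\
  (exists r, 0 < r /\ forall y, Rabs (y - x) < r -> derivable_pt_lim (fun z => D t z) y (Dx t y)) /\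
  derivable_pt_lim (fun y => Dx t y) x (Dxx t x).

Lemma heat_data_sub f ft fx fxx g gt gx gxx t x :
  heat_data f ft fx fxx t x -> heat_data g gt gx gxx t x ->
  heat_data (fun t x => f t x - g t x) (fun t x => ft t x - gt t x)
    (fun t x => fx t x - gx t x) (fun t x => fxx t x - gxx t x) t x.
Proof.
  intros [F1 [[r1 [Hr1 F2]] F3]] [G1 [[r2 [Hr2 G2]] G3]].
  split; [|split].
  - apply derivable_pt_lim_minus; auto.
  - exists (Rmin r1 r2). split; [apply Rmin_glb_lt; auto|]. intros y Hy.
    pose proof (Rmin_l r1 r2). pose proof (Rmin_r r1 r2).
    apply derivable_pt_lim_minus; [apply F2 | apply G2]; lra.
  - apply derivable_pt_lim_minus; auto.
Qed.

Lemma heat_data_of_C12 z zt zx zxx t x : classical_C12 z zt zx zxx -> 0 < t ->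
  heat_data z zt zx zxx t x.
Proof.
  intros [_ [_ [_ [_ Hder]]]] Ht. destruct (Hder t x Ht) as [D1 [_ D3]].
  split; [exact D1 | split; [|exact D3]].
  exists 1. split; [lra|]. intros y _. apply (Hder t y Ht).
Qed.

Lemma heat_data_const c t x :
  heat_data (fun _ _ => c) (fun _ _ => 0) (fun _ _ => 0) (fun _ _ => 0) t x.
Proof.
  split; [|split]; try apply derivable_pt_lim_const.
  exists 1. split; [lra|]. intros. apply derivable_pt_lim_const.
Qed.

Definition heat_penalty (K delta : R) (D : R -> R -> R) (t x : R) : R :=
  exp (- K * t) * D t x - delta * (x * x + 2 * t).

Lemma heat_operator_at_max D Dt Dx Dxx K delta ts xs r : 0 < r ->
  (forall s, ts - r < s <= ts -> heat_penalty K delta D s xs <= heat_penalty K delta D ts xs) ->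
  (forall y, Rabs (y - xs) < r -> heat_penalty K delta D ts y <= heat_penalty K delta D ts xs) ->
  heat_data D Dt Dx Dxx ts xs ->
  K * D ts xs <= Dt ts xs - Dxx ts xs.
Proof.
  intros Hr Hmt Hmx [HDt [[r' [Hr' HDx]] HDxx]].
  set (e := exp (- K * ts)). assert (He : 0 < e) by apply exp_pos.
  assert (Hdt : derivable_pt_lim (fun s => heat_penalty K delta D s xs) ts
      (e * Dt ts xs + (- K * e) * D ts xs - delta * 2)).
  { unfold heat_penalty. apply derivable_pt_lim_minus.
    - apply (derivable_pt_lim_val _ _ ((- K * exp (- K * ts)) * D ts xs + exp (- K * ts) * Dt ts xs));
        [unfold e; ring|].
      apply (derivable_pt_lim_mult (fun s => exp (- K * s)) (fun s => D s xs)); [|exact HDt].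
      apply derivable_pt_lim_exp_linear.
    - apply (derivable_pt_lim_val _ _ (delta * (0 + 2 * 1))); [ring|].
      apply derivable_pt_lim_scal, (derivable_pt_lim_plus (fun _ => xs * xs) (fun y => 2 * y)).
      + apply derivable_pt_lim_const.
      + apply derivable_pt_lim_scal, derivable_pt_lim_id. }
  assert (L1 := deriv_nonneg_at_left_max _ _ _ r Hr Hmt Hdt).
  pose proof (Rmin_l r r'). pose proof (Rmin_r r r').
  set (r'' := Rmin r r') in *.
  assert (Hr'' : 0 < r'') by (apply Rmin_glb_lt; auto).
  assert (Hdx : forall y, Rabs (y - xs) < r'' ->
      derivable_pt_lim (fun y => heat_penalty K delta D ts y) y (e * Dx ts y - delta * (2 * y))).
  { intros y Hy. unfold heat_penalty. apply derivable_pt_lim_minus.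
    - apply derivable_pt_lim_scal. apply HDx. lra.
    - apply (derivable_pt_lim_val _ _ (delta * ((1 * y + y * 1) + 0))); [ring|].
      apply derivable_pt_lim_scal, (derivable_pt_lim_plus (fun y => y * y) (fun _ => 2 * ts)).
      + apply (derivable_pt_lim_mult (fun y => y) (fun y => y)); apply derivable_pt_lim_id.
      + apply derivable_pt_lim_const. }
  assert (Hdxx : derivable_pt_lim (fun y => e * Dx ts y - delta * (2 * y)) xs (e * Dxx ts xs - delta * 2)).
  { apply derivable_pt_lim_minus; [apply derivable_pt_lim_scal; exact HDxx|].
    apply (derivable_pt_lim_val _ _ (delta * (2 * 1))); [ring|].
    apply derivable_pt_lim_scal, derivable_pt_lim_scal, derivable_pt_lim_id. }
  assert (L2 := second_deriv_nonpos_at_max _ _ xs _ r'' Hr''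
    (fun y Hy => Hmx y ltac:(lra)) Hdx Hdxx).
  assert (Hfinal : e * (K * D ts xs) <= e * (Dt ts xs - Dxx ts xs)) by nra.
  apply Rmult_le_reg_l in Hfinal; auto.
Qed.

Lemma heat_penalty_continuous K delta D a1 b1 a2 b2 : 0 <= a1 -> cont2_on closed_half D ->
  cont_box a1 b1 a2 b2 (heat_penalty K delta D).
Proof.
  intros Ha1 Hc. unfold heat_penalty. apply cont_box_sub; apply cont_box_mul.
  - apply cont_box_t. intro t. eapply derivable_lim_continuous. apply derivable_pt_lim_exp_linear.
  - apply (cont_box_of_cont2 closed_half); [intros t x [[]]; unfold closed_half; lra | exact Hc].
  - apply cont_box_const.
  - apply (cont_box_add _ _ _ _ (fun _ x => x * x) (fun t _ => 2 * t)).
    + apply cont_box_x. intro x. eapply derivable_lim_continuous.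
      apply (derivable_pt_lim_mult (fun y => y) (fun y => y)); apply derivable_pt_lim_id.
    + apply cont_box_t. intro. eapply derivable_lim_continuous.
      apply derivable_pt_lim_scal, derivable_pt_lim_id.
Qed.

Lemma heat_penalty_pos K delta D t x : 0 < delta -> 0 <= t -> 0 < heat_penalty K delta D t x -> 0 < D t x.
Proof.
  intros Hdelta Ht Hp. unfold heat_penalty in Hp. pose proof (exp_pos (- K * t)).
  assert (0 <= delta * (x * x + 2 * t)) by (apply Rmult_le_pos; nra).
  destruct (Rle_or_lt (D t x) 0); auto. nra.
Qed.

Lemma heat_penalty_far_negative K delta D Bd : 0 <= K -> 0 < delta ->
  (forall t x, 0 <= t -> D t x <= Bd) ->
  forall t x, 0 <= t -> Rmax Bd 0 / delta + 1 <= Rabs x -> heat_penalty K delta D t x < 0.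
Proof.
  intros HK Hdelta Hb t x Ht Hx. unfold heat_penalty.
  pose proof (Rmax_l Bd 0). pose proof (Rmax_r Bd 0). set (Bd' := Rmax Bd 0) in *.
  assert (Hexp := exp_neg_le_1 K t HK Ht). pose proof (exp_pos (- K * t)).
  assert (HD : exp (-K * t) * D t x <= Bd').
  { specialize (Hb t x Ht). destruct (Rle_or_lt (D t x) 0).
    - assert (exp (-K * t) * D t x <= 0) by nra. lra.
    - assert (exp (-K * t) * D t x <= D t x) by nra. lra. }
  assert (Hbd : 0 <= Bd' / delta) by (apply Rdiv_nonneg; lra).
  assert (Hxx : Bd' / delta + 1 <= x * x).
  { assert (x * x = Rabs x * Rabs x) by (rewrite <- Rabs_mult, Rabs_pos_eq; nra).
    assert (Rabs x * 1 <= Rabs x * Rabs x) by (apply Rmult_le_compat_l; pose proof (Rabs_pos x); lra).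
    lra. }
  assert (delta * (x * x) >= delta * (Bd' / delta + 1)) by (apply Rmult_ge_compat_l; lra).
  replace (delta * (Bd' / delta + 1)) with (Bd' + delta) in * by (field; lra).
  nra.
Qed.

(** Maximum principle on [0,oo) x R for bounded continuous D with D(0,.) <= 0 and
    D_t - D_xx <= C D wherever D > 0: if D(t1,x1) > 0, the maximum of
    e^{-(C+1)t} D - delta (x^2 + 2t) over [0,t1] x R is positive and attained
    at an interior point, where heat_operator_at_max contradicts the equation. *)
Lemma maximum_principle (D Dt Dx Dxx : R -> R -> R) (C Bd : R) :
  0 <= C ->
  cont2_on closed_half D ->
  (forall t x, 0 <= t -> D t x <= Bd) ->
  (forall x, D 0 x <= 0) ->
  (forall t x, 0 < t -> 0 < D t x ->
     heat_data D Dt Dx Dxx t x /\ Dt t x - Dxx t x <= C * D t x) ->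
  forall t x, 0 <= t -> D t x <= 0.
Proof.
  intros HC Hc Hb H0 Hpde t1 x1 Ht1.
  destruct (Rle_or_lt (D t1 x1) 0) as [|Hpos]; auto. exfalso.
  set (K := C + 1).
  set (E1 := exp (-K * t1) * D t1 x1).
  assert (HE1 : 0 < E1) by (unfold E1; apply Rmult_lt_0_compat; auto; apply exp_pos).
  assert (Hq : 0 < x1 * x1 + 2 * t1 + 1) by nra.
  set (delta := E1 / (2 * (x1 * x1 + 2 * t1 + 1))).
  assert (Hdelta : 0 < delta) by (unfold delta; apply Rdiv_lt_0_compat; lra).
  set (Phi := heat_penalty K delta D).
  assert (HPhi1 : 0 < Phi t1 x1).
  { assert (delta * (x1 * x1 + 2 * t1 + 1) = E1 / 2) by (unfold delta; field; lra).
    unfold Phi, heat_penalty. fold E1. nra. }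
  set (Rr := Rabs x1 + Rmax Bd 0 / delta + 1).
  assert (HRr : Rabs x1 < Rr /\ Rmax Bd 0 / delta + 1 <= Rr).
  { pose proof (Rmax_r Bd 0). assert (0 <= Rmax Bd 0 / delta) by (apply Rdiv_nonneg; lra).
    pose proof (Rabs_pos x1). unfold Rr. lra. }
  destruct (cont_box_argmax 0 t1 (-Rr) Rr Phi Ht1 ltac:(pose proof (Rabs_pos x1); lra)
    (heat_penalty_continuous K delta D 0 t1 (-Rr) Rr ltac:(lra) Hc)) as [ts [xs [[Hts Hxs] Hmax]]].
  assert (Hge : Phi t1 x1 <= Phi ts xs).
  { apply Hmax. split; [lra|]. apply Rabs_le_bounds. lra. }
  assert (HDs : 0 < D ts xs) by (apply (heat_penalty_pos K delta D ts xs); [lra | lra | fold Phi; lra]).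
  assert (Hts0 : 0 < ts).
  { destruct (Req_dec ts 0) as [Hts0|]; [|lra]. rewrite Hts0 in HDs. specialize (H0 xs). lra. }
  assert (Hxs' : Rabs xs < Rr).
  { destruct (Rlt_or_le (Rabs xs) Rr) as [|Hf]; auto.
    pose proof (heat_penalty_far_negative K delta D Bd ltac:(unfold K; lra) Hdelta Hb ts xs ltac:(lra) ltac:(lra)).
    unfold Phi in *. lra. }
  destruct (Hpde ts xs Hts0 HDs) as [Hdata Hineq].
  pose proof (Rmin_l ts (Rr - Rabs xs)). pose proof (Rmin_r ts (Rr - Rabs xs)).
  assert (K * D ts xs <= Dt ts xs - Dxx ts xs).
  { apply (heat_operator_at_max D Dt Dx Dxx K delta ts xs (Rmin ts (Rr - Rabs xs))); auto;
      [apply Rmin_glb_lt; lra | |]; intros y Hy; apply Hmax; split; try lra.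
    assert (Hy' : Rabs y < Rr).
    { replace y with ((y - xs) + xs) by ring. eapply Rle_lt_trans; [apply Rabs_triang | lra]. }
    apply Rabs_def2 in Hy'. lra. }
  unfold K in *. lra.
Qed.

Lemma solution_u_facts d r a b u0 v0 u v : is_solution_11 d r a b u0 v0 u v ->
  exists B ut ux uxx, 1 <= B /\ (forall t x, 0 <= t -> Rabs (u t x) <= B /\ Rabs (v t x) <= B) /\
    (forall x, u 0 x = u0 x) /\ classical_C12 u ut ux uxx /\
    (forall t x, 0 < t -> ut t x - uxx t x = u t x * (1 - u t x - a * v t x)).
Proof.
  intros [[B HB] [H0 [ut [ux [uxx [vt [vx [vxx [Hu [_ Heq]]]]]]]]]].
  exists (Rmax B 1), ut, ux, uxx. split; [apply Rmax_r|]. split.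
  { intros t x Ht. destruct (HB t x Ht). split; eapply Rle_trans; eauto; apply Rmax_l. }
  split; [intro x; apply H0|]. split; auto. intros t x Ht; apply Heq; auto.
Qed.

Lemma reaction_rate_bounds a B U V : 0 < a -> Rabs U <= B -> Rabs V <= B ->
  - (B + a * B) <= 1 - U - a * V <= 1 + B + a * B.
Proof.
  intros Ha HU HV. apply Rabs_le_bounds in HU; apply Rabs_le_bounds in HV.
  assert (- (a * B) <= a * V <= a * B) by (split; nra). split; lra.
Qed.

(** u >= 0: maximum principle applied to -u. *)
Lemma u_nonneg d r a b u0 v0 u v : 0 < a -> H_inf u0 v0 -> is_solution_11 d r a b u0 v0 u v ->
  forall t x, 0 <= t -> 0 <= u t x.
Proof.
  intros Ha Hi Hs.
  destruct (solution_u_facts _ _ _ _ _ _ _ _ Hs) as [B [ut [ux [uxx [HB [Hb [H0 [Hc Heq]]]]]]]].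
  intros t x Ht.
  enough (0 - u t x <= 0) by lra.
  apply (maximum_principle (fun t x => 0 - u t x) (fun t x => 0 - ut t x) (fun t x => 0 - ux t x)
     (fun t x => 0 - uxx t x) (1 + B + a * B) B); auto.
  - nra.
  - apply (cont2_sub _ (fun _ _ => 0)); [|apply Hc].
    intros t' x' _ eps He. exists 1. split; [lra|]. intros. rewrite Rminus_diag, Rabs_R0. lra.
  - intros t' x' Ht'. destruct (Hb t' x' Ht') as [Hu _]. apply Rabs_le_bounds in Hu. lra.
  - intros y. rewrite H0. destruct Hi as [_ [_ [Hi _]]]. destruct (Hi y). lra.
  - intros t' x' Ht' Hpos. split.
    + apply (heat_data_sub _ _ _ _ _ _ _ _ _ _ (heat_data_const 0 t' x') (heat_data_of_C12 _ _ _ _ _ _ Hc Ht')).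
    + replace (0 - ut t' x' - (0 - uxx t' x')) with (- (ut t' x' - uxx t' x')) by ring. rewrite Heq by auto.
      destruct (Hb t' x' ltac:(lra)) as [Hu Hv].
      destruct (reaction_rate_bounds a B (u t' x') (v t' x') ltac:(lra) Hu Hv). nra.
Qed.

Lemma heat_data_exp A m k t x :
  heat_data (fun t x => exp (A + m * t + k * x)) (fun t x => m * exp (A + m * t + k * x))
    (fun t x => k * exp (A + m * t + k * x)) (fun t x => k * (k * exp (A + m * t + k * x))) t x.
Proof.
  assert (Hx : forall t y, derivable_pt_lim (fun z => exp (A + m * t + k * z)) y (k * exp (A + m * t + k * y)))
    by (intros; apply derivable_pt_lim_exp_affine).
  split; [|split].
  - apply (derivable_pt_lim_ext (fun s => exp ((A + k * x) + m * s))); [intro; f_equal; ring|].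
    replace (A + m * t + k * x) with ((A + k * x) + m * t) by ring. apply derivable_pt_lim_exp_affine.
  - exists 1. split; [lra|]. intros y _. apply Hx.
  - apply derivable_pt_lim_scal, Hx.
Qed.

Lemma exp_wave_continuous A m k : cont2_on closed_half (fun t x => exp (A + m * t + k * x)).
Proof.
  apply cont2_of_box. intros a0 _.
  apply (cont_box_ext _ _ _ _ (fun t x => exp (m * t + k * x + A))); [intros; f_equal; ring|].
  apply cont_box_comp_affine, exp_continuous.
Qed.

Lemma u_upper d r a b u0 v0 u v : 0 < a -> H_inf u0 v0 -> is_solution_11 d r a b u0 v0 u v ->
  exists C0 x0, 0 <= C0 /\ forall lam, 0 < lam -> forall t x, 0 <= t ->
    u t x <= exp (lam * x0 + (lam * lam + C0) * t + (- lam) * x).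
Proof.
  intros Ha Hi Hs.
  assert (Hnn := u_nonneg _ _ _ _ _ _ _ _ Ha Hi Hs).
  destruct (solution_u_facts _ _ _ _ _ _ _ _ Hs) as [B [ut [ux [uxx [HB [Hb [H0 [Hc Heq]]]]]]]].
  destruct Hi as [_ [_ [Hi [[_ [x0 [_ [_ [_ Hright]]]]] _]]]].
  set (C := 1 + B + a * B).
  exists C, x0. split; [unfold C; nra|]. intros lam Hlam.
  set (mu := lam * lam + C).
  set (Z := fun t x => exp (lam * x0 + mu * t + (- lam) * x)).
  intros t x Ht. enough (u t x - Z t x <= 0) by (unfold Z in *; lra).
  apply (maximum_principle (fun t x => u t x - Z t x) (fun t x => ut t x - mu * Z t x)
     (fun t x => ux t x - (- lam) * Z t x) (fun t x => uxx t x - (- lam) * (- lam * Z t x)) C B);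
     auto.
  - unfold C; nra.
  - apply cont2_sub; [apply Hc | apply exp_wave_continuous].
  - intros t' x' Ht'. destruct (Hb t' x' Ht') as [Hu _]. apply Rabs_le_bounds in Hu.
    pose proof (exp_pos (lam * x0 + mu * t' + - lam * x')). unfold Z. lra.
  - intros y. rewrite H0. unfold Z. rewrite Rmult_0_r, Rplus_0_r.
    destruct (Rle_or_lt x0 y).
    + rewrite Hright; auto. pose proof (exp_pos (lam * x0 + - lam * y)); lra.
    + destruct (Hi y) as [[_ Hu1] _].
      assert (1 < exp (lam * x0 + - lam * y)) by (rewrite <- exp_0; apply exp_increasing; nra). lra.
  - intros t' x' Ht' Hpos. split.
    + exact (heat_data_sub _ _ _ _ _ _ _ _ _ _ (heat_data_of_C12 _ _ _ _ _ _ Hc Ht')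
        (heat_data_exp (lam * x0) mu (- lam) t' x')).
    + replace (ut t' x' - mu * Z t' x' - (uxx t' x' - - lam * (- lam * Z t' x')))
        with ((ut t' x' - uxx t' x') - C * Z t' x') by (unfold mu; ring).
      rewrite Heq by auto. destruct (Hb t' x' ltac:(lra)) as [Hu Hv].
      destruct (reaction_rate_bounds a B (u t' x') (v t' x') ltac:(lra) Hu Hv).
      assert (0 <= u t' x') by (apply Hnn; lra).
      unfold C. nra.
Qed.

(** Q(th) = cos^2 th on [-pi/2, pi/2], extended by 0: a continuous bump whose
    positivity set is the open interval, used for travelling-wave subsolutions. *)
Definition Q (th : R) := cos (clamp (-(PI/2)) (PI/2) th) * cos (clamp (-(PI/2)) (PI/2) th).

Lemma Q_continuous th : continuity_pt Q th.
Proof.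
  pose proof PI2_RGT_0.
  assert (Hc : continuity_pt (fun y => cos (clamp (-(PI/2)) (PI/2) y)) th).
  { apply (continuity_pt_comp (clamp (-(PI/2)) (PI/2)) cos); [apply clamp_continuous; lra|].
    apply continuity_cos. }
  exact (continuity_pt_mult _ _ _ Hc Hc).
Qed.

Lemma Q_bounds th : 0 <= Q th <= 1.
Proof. unfold Q. set (c := cos _). pose proof (COS_bound (clamp (-(PI/2)) (PI/2) th)). fold c in H. nra. Qed.

Lemma Q_inside th : Rabs th < PI/2 -> Q th = cos th * cos th.
Proof. intro H. apply Rabs_def2 in H. unfold Q. rewrite clamp_id; [auto | lra]. Qed.

Lemma Q_pos_inside th : 0 < Q th -> Rabs th < PI/2.
Proof.
  intro H. destruct (Rlt_or_le (Rabs th) (PI/2)) as [|Hle]; auto. exfalso.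
  assert (Hcl : clamp (-(PI/2)) (PI/2) th = PI/2 \/ clamp (-(PI/2)) (PI/2) th = -(PI/2)).
  { pose proof PI2_RGT_0. unfold clamp, Rmax, Rmin. revert Hle. unfold Rabs.
    repeat destruct Rle_dec; destruct Rcase_abs; intros; lra. }
  unfold Q in H. destruct Hcl as [Hcl|Hcl]; rewrite Hcl in H;
    rewrite ?cos_neg, cos_PI2 in H; lra.
Qed.

Lemma Q_lower th : Rabs th <= 1 -> cos 1 * cos 1 <= Q th.
Proof.
  intro H. pose proof PI2_1. rewrite Q_inside by lra.
  assert (Hc1 : 0 < cos 1) by (apply cos_gt_0; lra).
  assert (cos 1 <= cos th).
  { assert (Hc : cos th = cos (Rabs th)) by (unfold Rabs; destruct Rcase_abs; [rewrite cos_neg|]; auto).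
    rewrite Hc. destruct (Req_dec (Rabs th) 1) as [->|]; [lra|].
    left. apply cos_decreasing_1; try lra; pose proof (Rabs_pos th); lra. }
  nra.
Qed.

Lemma cos1_sq_pos : 0 < cos 1 * cos 1.
Proof. assert (0 < cos 1) by (apply cos_gt_0; pose proof PI2_1; lra). nra. Qed.

Lemma derivable_pt_lim_cos_affine (th : R -> R) al be s : (forall y, th y = al + be * y) ->
  derivable_pt_lim (fun y => cos (th y)) s (- be * sin (th s)).
Proof.
  intro Hth. apply (derivable_pt_lim_ext (fun y => cos (al + be * y))); [intro; now rewrite Hth|].
  rewrite Hth. apply (derivable_pt_lim_val _ _ (- sin (al + be * s) * (0 + be * 1))); [ring|].
  apply (derivable_pt_lim_comp (fun y => al + be * y) cos); [|apply derivable_pt_lim_cos].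
  apply derivable_pt_lim_plus; [apply derivable_pt_lim_const | apply derivable_pt_lim_scal, derivable_pt_lim_id].
Qed.

Lemma derivable_pt_lim_sin_affine (th : R -> R) al be s : (forall y, th y = al + be * y) ->
  derivable_pt_lim (fun y => sin (th y)) s (be * cos (th s)).
Proof.
  intro Hth. apply (derivable_pt_lim_ext (fun y => sin (al + be * y))); [intro; now rewrite Hth|].
  rewrite Hth. apply (derivable_pt_lim_val _ _ (cos (al + be * s) * (0 + be * 1))); [ring|].
  apply (derivable_pt_lim_comp (fun y => al + be * y) sin); [|apply derivable_pt_lim_sin].
  apply derivable_pt_lim_plus; [apply derivable_pt_lim_const | apply derivable_pt_lim_scal, derivable_pt_lim_id].
Qed.

Lemma derivable_pt_lim_cossin_affine (th : R -> R) al be s : (forall y, th y = al + be * y) ->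
  derivable_pt_lim (fun y => cos (th y) * sin (th y)) s
    (be * (cos (th s) * cos (th s) - sin (th s) * sin (th s))).
Proof.
  intro Hth.
  eapply derivable_pt_lim_val; [|apply (derivable_pt_lim_mult (fun y => cos (th y)) (fun y => sin (th y)));
    [apply (derivable_pt_lim_cos_affine th al be) | apply (derivable_pt_lim_sin_affine th al be)]]; auto.
  ring.
Qed.

Lemma derivable_pt_lim_Q_affine (th : R -> R) al be s : (forall y, th y = al + be * y) ->
  Rabs (th s) < PI/2 -> derivable_pt_lim (fun y => Q (th y)) s (-2 * be * cos (th s) * sin (th s)).
Proof.
  intros Hth Hin.
  assert (Hcont : continuity_pt (fun y => Rabs (th y)) s).
  { apply (continuity_pt_comp th Rabs); [|apply Rcontinuity_abs].
    eapply derivable_lim_continuous. apply (derivable_pt_lim_ext (fun y => al + be * y)); [intro; auto|].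
    apply derivable_pt_lim_plus; [apply derivable_pt_lim_const | apply derivable_pt_lim_scal, derivable_pt_lim_id]. }
  destruct (continuity_pt_elim _ _ Hcont (PI/2 - Rabs (th s)) ltac:(lra)) as [r [Hr Hnear]].
  apply (derivable_pt_lim_ball_ext (fun y => cos (th y) * cos (th y)) _ s _ r Hr).
  { intros y Hy. rewrite Q_inside; auto. specialize (Hnear y Hy). apply Rabs_def2 in Hnear. lra. }
  eapply derivable_pt_lim_val; [|apply (derivable_pt_lim_mult (fun y => cos (th y)) (fun y => cos (th y)));
    apply (derivable_pt_lim_cos_affine th al be); auto].
  ring.
Qed.

Definition cos2_wave th0 K kap xi c t y := th0 * exp (- K * t) * Q (kap * (y - xi - c * t)).

Definition wave_dt th0 K kap xi c t y :=
  th0 * exp (- K * t) * (- K * Q (kap * (y - xi - c * t))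
    + 2 * kap * c * cos (kap * (y - xi - c * t)) * sin (kap * (y - xi - c * t))).

Definition wave_dx th0 K kap xi c t y :=
  th0 * exp (- K * t) * (-2 * kap * (cos (kap * (y - xi - c * t)) * sin (kap * (y - xi - c * t)))).

Definition wave_dxx th0 K kap xi c t y :=
  th0 * exp (- K * t) * (-2 * kap * (kap * (cos (kap * (y - xi - c * t)) * cos (kap * (y - xi - c * t))
    - sin (kap * (y - xi - c * t)) * sin (kap * (y - xi - c * t))))).

Lemma cos2_wave_heat_data th0 K kap xi c t y : Rabs (kap * (y - xi - c * t)) < PI/2 ->
  heat_data (cos2_wave th0 K kap xi c) (wave_dt th0 K kap xi c) (wave_dx th0 K kap xi c)
    (wave_dxx th0 K kap xi c) t y.
Proof.
  intro Hin.
  assert (Hspace : forall w, Rabs (kap * (w - xi - c * t)) < PI/2 ->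
    derivable_pt_lim (fun z => cos2_wave th0 K kap xi c t z) w (wave_dx th0 K kap xi c t w)).
  { intros w Hw. unfold cos2_wave, wave_dx.
    apply (derivable_pt_lim_val _ _ (th0 * exp (- K * t) * (-2 * kap * cos (kap * (w - xi - c * t))
      * sin (kap * (w - xi - c * t))))); [ring|].
    apply derivable_pt_lim_scal.
    apply (derivable_pt_lim_Q_affine (fun z => kap * (z - xi - c * t)) (- kap * (xi + c * t)) kap);
      [intro; ring | exact Hw]. }
  split; [|split].
  - unfold cos2_wave, wave_dt.
    apply (derivable_pt_lim_val _ _ ((th0 * (- K * exp (- K * t))) * Q (kap * (y - xi - c * t))
      + th0 * exp (- K * t) * (-2 * (- kap * c) * cos (kap * (y - xi - c * t)) * sin (kap * (y - xi - c * t)))));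
      [ring|].
    apply (derivable_pt_lim_mult (fun s => th0 * exp (- K * s)) (fun s => Q (kap * (y - xi - c * s)))).
    + apply derivable_pt_lim_scal, derivable_pt_lim_exp_linear.
    + apply (derivable_pt_lim_Q_affine (fun s => kap * (y - xi - c * s)) (kap * (y - xi)) (- kap * c));
        [intro; ring | exact Hin].
  - assert (Hcont : continuity_pt (fun w => Rabs (kap * (w - xi - c * t))) y).
    { apply (continuity_pt_comp (fun w => kap * (w - xi - c * t)) Rabs); [|apply Rcontinuity_abs].
      eapply derivable_lim_continuous. apply (derivable_pt_lim_ext (fun w => (- kap * (xi + c * t)) + kap * w));
        [intro; ring|].
      apply derivable_pt_lim_plus;
        [apply derivable_pt_lim_const | apply derivable_pt_lim_scal, derivable_pt_lim_id]. }
    destruct (continuity_pt_elim _ _ Hcont (PI/2 - Rabs (kap * (y - xi - c * t))) ltac:(lra)) as [r [Hr Hnear]].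
    exists r. split; auto. intros w Hw. apply Hspace.
    specialize (Hnear w Hw). apply Rabs_def2 in Hnear. lra.
  - unfold wave_dx, wave_dxx. apply derivable_pt_lim_scal.
    apply (derivable_pt_lim_val _ _ (-2 * kap * (kap * (cos (kap * (y - xi - c * t)) * cos (kap * (y - xi - c * t))
      - sin (kap * (y - xi - c * t)) * sin (kap * (y - xi - c * t)))))); [ring|].
    apply derivable_pt_lim_scal.
    apply (derivable_pt_lim_cossin_affine (fun z => kap * (z - xi - c * t)) (- kap * (xi + c * t)) kap).
    intro; ring.
Qed.

Lemma cos2_wave_operator th0 K kap xi c t y : 0 <= th0 -> 0 < kap <= 1 ->
  Rabs (kap * (y - xi - c * t)) < PI/2 ->
  wave_dt th0 K kap xi c t y - wave_dxx th0 K kap xi c t y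
    <= - (K - 2 - c * c) * cos2_wave th0 K kap xi c t y.
Proof.
  intros Hth Hkap Hin. unfold wave_dt, wave_dxx, cos2_wave. rewrite Q_inside by exact Hin.
  set (co := cos _). set (si := sin _). set (E := th0 * exp (- K * t)).
  assert (HE : 0 <= E) by (unfold E; pose proof (exp_pos (- K * t)); nra).
  assert (Hsq : 0 <= (c * co - kap * si) * (c * co - kap * si)) by apply Rle_0_sqr.
  assert (Hk : 0 <= (1 - kap * kap) * (co * co)) by (apply Rmult_le_pos; [nra | apply Rle_0_sqr]).
  assert (Hs : 0 <= kap * kap * (si * si)) by (apply Rmult_le_pos; apply Rle_0_sqr).
  assert (Halg : - K * (co * co) + 2 * kap * c * co * si + 2 * kap * kap * (co * co - si * si)
    <= - (K - 2 - c * c) * (co * co)) by nra.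
  replace (E * (- K * (co * co) + 2 * kap * c * co * si) - E * (-2 * kap * (kap * (co * co - si * si))))
    with (E * (- K * (co * co) + 2 * kap * c * co * si + 2 * kap * kap * (co * co - si * si))) by ring.
  replace (- (K - 2 - c * c) * (E * (co * co))) with (E * (- (K - 2 - c * c) * (co * co))) by ring.
  apply Rmult_le_compat_l; auto.
Qed.

Lemma cos2_wave_continuous th0 K kap xi c : cont2_on closed_half (cos2_wave th0 K kap xi c).
Proof.
  apply cont2_of_box. intros a0 _. unfold cos2_wave. apply cont_box_mul.
  - apply (cont_box_mul _ _ _ _ (fun _ _ => th0)); [apply cont_box_const|].
    apply cont_box_t. intro s. eapply derivable_lim_continuous. apply derivable_pt_lim_exp_linear.
  - apply (cont_box_ext _ _ _ _ (fun t y => Q ((- kap * c) * t + kap * y + (- kap * xi))));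
      [intros; f_equal; ring|].
    apply cont_box_comp_affine, Q_continuous.
Qed.

Lemma cos2_wave_le th0 K kap xi c t y : 0 < th0 -> 0 <= K -> 0 <= t -> cos2_wave th0 K kap xi c t y <= th0.
Proof.
  intros Hth HK Ht. unfold cos2_wave. pose proof (exp_pos (- K * t)). pose proof (exp_neg_le_1 K t HK Ht).
  destruct (Q_bounds (kap * (y - xi - c * t))).
  assert (exp (- K * t) * Q (kap * (y - xi - c * t)) <= 1) by nra. nra.
Qed.

Lemma cos2_wave_pos_phase th0 K kap xi c t y : 0 < cos2_wave th0 K kap xi c t y ->
  Rabs (kap * (y - xi - c * t)) < PI/2.
Proof.
  intros Hz. apply Q_pos_inside. unfold cos2_wave in Hz. destruct (Q_bounds (kap * (y - xi - c * t))).
  destruct (Rle_or_lt (Q (kap * (y - xi - c * t))) 0) as [Hq|]; auto.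
  assert (Q (kap * (y - xi - c * t)) = 0) as Hq0 by lra. rewrite Hq0, Rmult_0_r in Hz. lra.
Qed.

(** At t = 0 the wave sits below u0 when its support lies in (-oo, 0],
    which kap xi + 2 <= 0 guarantees since pi/2 < 2. *)
Lemma cos2_wave_initial th0 K kap xi c u0 y : 0 < kap -> kap * xi + 2 <= 0 ->
  (forall x, x <= 0 -> th0 <= u0 x <= 1) -> 0 <= u0 y ->
  cos2_wave th0 K kap xi c 0 y <= u0 y.
Proof.
  intros Hkap Hxi Hleft Hu0.
  destruct (Rle_or_lt (cos2_wave th0 K kap xi c 0 y) 0) as [|Hz]; [lra|].
  pose proof (cos2_wave_pos_phase _ _ _ _ _ _ _ Hz) as Hin. apply Rabs_def2 in Hin. destruct Hin as [Hin _].
  pose proof PI_4. rewrite Rmult_0_r, Rminus_0_r in Hin.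
  assert (Hy : y <= 0) by nra. destruct (Hleft y Hy).
  unfold cos2_wave in *. rewrite Rmult_0_r, exp_0, Rmult_1_r in *.
  destruct (Q_bounds (kap * (y - xi - c * 0))). nra.
Qed.

Lemma u_lower d r a b u0 v0 u v : 0 < a -> H_inf u0 v0 -> is_solution_11 d r a b u0 v0 u v ->
  exists C1 th0, 0 < th0 /\ 0 <= C1 /\ forall kap xi c, 0 < kap <= 1 -> kap * xi + 2 <= 0 ->
    forall t y, 0 <= t -> cos2_wave th0 (C1 + 2 + c * c) kap xi c t y <= u t y.
Proof.
  intros Ha Hi Hs.
  assert (Hnn := u_nonneg _ _ _ _ _ _ _ _ Ha Hi Hs).
  destruct (solution_u_facts _ _ _ _ _ _ _ _ Hs) as [B [ut [ux [uxx [HB [Hb [H0 [Hc Heq]]]]]]]].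
  destruct Hi as [_ [_ [Hi [[th0 [_ [Hth [_ [Hleft _]]]]] _]]]].
  exists (B + a * B), th0. split; [auto|]. split; [nra|].
  intros kap xi c Hkap Hxi.
  set (K := B + a * B + 2 + c * c). assert (HK : 0 <= K) by (unfold K; nra).
  set (z := cos2_wave th0 K kap xi c).
  intros t y Ht. enough (z t y - u t y <= 0) by (unfold z in *; lra).
  apply (maximum_principle (fun t x => z t x - u t x)
    (fun t x => wave_dt th0 K kap xi c t x - ut t x) (fun t x => wave_dx th0 K kap xi c t x - ux t x)
    (fun t x => wave_dxx th0 K kap xi c t x - uxx t x) (1 + B + a * B) (th0 + B)); auto.
  - nra.
  - apply cont2_sub; [apply cos2_wave_continuous | apply Hc].
  - intros t' x' Ht'. destruct (Hb t' x' Ht') as [Hu _]. apply Rabs_le_bounds in Hu.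
    pose proof (cos2_wave_le th0 K kap xi c t' x' Hth HK Ht'). unfold z. lra.
  - intros y0. rewrite H0. destruct (Hi y0) as [[Hu0 _] _].
    pose proof (cos2_wave_initial th0 K kap xi c u0 y0 (proj1 Hkap) Hxi Hleft Hu0). unfold z. lra.
  - intros t' y' Ht' Hpos.
    assert (Hin : Rabs (kap * (y' - xi - c * t')) < PI/2).
    { apply (cos2_wave_pos_phase th0 K). pose proof (Hnn t' y' ltac:(lra)). unfold z in Hpos. lra. }
    split.
    + exact (heat_data_sub _ _ _ _ _ _ _ _ _ _ (cos2_wave_heat_data th0 K kap xi c t' y' Hin)
        (heat_data_of_C12 _ _ _ _ _ _ Hc Ht')).
    + assert (Hop := cos2_wave_operator th0 K kap xi c t' y' ltac:(lra) Hkap Hin). fold z in Hop.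
      replace (K - 2 - c * c) with (B + a * B) in Hop by (unfold K; ring).
      replace (wave_dt th0 K kap xi c t' y' - ut t' y' - (wave_dxx th0 K kap xi c t' y' - uxx t' y'))
        with ((wave_dt th0 K kap xi c t' y' - wave_dxx th0 K kap xi c t' y') - (ut t' y' - uxx t' y')) by ring.
      rewrite Heq by auto. destruct (Hb t' y' ltac:(lra)) as [Hu Hv].
      destruct (reaction_rate_bounds a B (u t' y') (v t' y') ltac:(lra) Hu Hv).
      assert (Hzp : 0 <= z t' y') by (pose proof (Hnn t' y' ltac:(lra)); lra).
      set (cc := 1 - u t' y' - a * v t' y') in *.
      assert (cc * (z t' y' - u t' y') <= (1 + B + a * B) * (z t' y' - u t' y')) by nra.
      assert (- cc * z t' y' <= (B + a * B) * z t' y') by nra.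
      nra.
Qed.

Lemma Rbar_le_trans x y z : Rbar_le x y -> Rbar_le y z -> Rbar_le x z.
Proof. destruct x, y, z; simpl; auto; try lra; tauto. Qed.

Lemma Rbar_le_lt_trans x y z : Rbar_le x y -> Rbar_lt y z -> Rbar_lt x z.
Proof. destruct x, y, z; simpl; auto; try lra; tauto. Qed.

Lemma Rbar_lt_le_trans x y z : Rbar_lt x y -> Rbar_le y z -> Rbar_lt x z.
Proof. destruct x, y, z; simpl; auto; try lra; tauto. Qed.

Lemma Rbar_eq_0_of_bounds L : (forall k, 0 < k -> Rbar_le L (Finite k)) ->
  (forall k, 0 < k -> Rbar_le (Finite (-k)) L) -> L = Finite 0.
Proof.
  intros H1 H2. destruct L as [l| |].
  - f_equal. destruct (Rtotal_order l 0) as [Hl|[Hl|Hl]]; auto.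
    + specialize (H2 (-l/2) ltac:(lra)). simpl in H2. lra.
    + specialize (H1 (l/2) ltac:(lra)). simpl in H1. lra.
  - specialize (H1 1 ltac:(lra)). simpl in H1. tauto.
  - specialize (H2 1 ltac:(lra)). simpl in H2. tauto.
Qed.

Lemma Rbar_eq_pinf_of_bounds L : (forall M, Rbar_le (Finite M) L) -> L = p_infty.
Proof.
  intros H. destruct L as [l| |]; auto.
  - specialize (H (l + 1)). simpl in H. lra.
  - specialize (H 0). simpl in H. tauto.
Qed.

Lemma finite_nonneg_of_bounds L Mb : Rbar_le L (Finite Mb) ->
  (forall k, 0 < k -> Rbar_le (Finite (-k)) L) -> exists W, L = Finite W /\ 0 <= W.
Proof.
  intros H1 H2. destruct L as [w| |]; simpl in *; try tauto.
  - exists w. split; auto. destruct (Rle_or_lt 0 w); auto. specialize (H2 (-w/2) ltac:(lra)). simpl in H2. lra.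
  - specialize (H2 1 ltac:(lra)). simpl in H2. tauto.
Qed.

Lemma weps_le_of_lower u e t x Lb : 0 < e -> 0 < Lb -> Lb <= resc u e t x ->
  Rbar_le (weps u e t x) (Finite (- e * ln Lb)).
Proof.
  intros He HL H. unfold weps. destruct Rlt_dec as [Hp|Hp]; [|lra]. simpl.
  assert (ln Lb <= ln (resc u e t x)) by (destruct H as [H|H]; [left; apply ln_increasing; auto | rewrite H; lra]).
  nra.
Qed.

Lemma weps_ge_of_upper u e t x Ub : 0 < e -> 0 < Ub -> resc u e t x <= Ub ->
  Rbar_le (Finite (- e * ln Ub)) (weps u e t x).
Proof.
  intros He HU H. unfold weps. destruct Rlt_dec as [Hp|Hp]; simpl; auto.
  assert (ln (resc u e t x) <= ln Ub) by (destruct H as [H|H]; [left; apply ln_increasing; auto | rewrite H; lra]).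
  nra.
Qed.

Definition near (delta t x e t' x' : R) :=
  0 < e < delta /\ 0 <= t' /\ Rabs (t' - t) < delta /\ Rabs (x' - x) < delta.

Definition ev_lt (f : R -> R -> R -> Rbar) t x M := exists delta, 0 < delta /\
  forall e t' x', near delta t x e t' x' -> Rbar_lt (f e t' x') (Finite M).
Definition ev_gt (f : R -> R -> R -> Rbar) t x M := exists delta, 0 < delta /\
  forall e t' x', near delta t x e t' x' -> Rbar_lt (Finite M) (f e t' x').

Lemma limsup_ev f t x L M : hr_limsup f t x L -> Rbar_lt L (Finite M) -> ev_lt f t x M.
Proof. intros [H1 _] H. destruct (H1 M H) as [d [Hd H2]]. exists d. split; auto. intros e t' x' [? [? []]]. auto. Qed.

Lemma liminf_ev f t x L M : hr_liminf f t x L -> Rbar_lt (Finite M) L -> ev_gt f t x M.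
Proof. intros [H1 _] H. destruct (H1 M H) as [d [Hd H2]]. exists d. split; auto. intros e t' x' [? [? []]]. auto. Qed.

Lemma ev_lt_gt_incompatible f t x M1 M2 : 0 <= t -> M1 <= M2 -> ev_lt f t x M1 -> ev_gt f t x M2 -> False.
Proof.
  intros Ht HM [d1 [Hd1 H1]] [d2 [Hd2 H2]].
  set (e := Rmin d1 d2 / 2).
  assert (0 < Rmin d1 d2) by (apply Rmin_glb_lt; auto).
  pose proof (Rmin_l d1 d2). pose proof (Rmin_r d1 d2).
  assert (Hn : forall d, Rmin d1 d2 <= d -> near d t x e t x).
  { intros d Hd. unfold near, e. rewrite !Rminus_diag, Rabs_R0. repeat split; lra. }
  specialize (H1 _ _ _ (Hn d1 ltac:(lra))). specialize (H2 _ _ _ (Hn d2 ltac:(lra))).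
  destruct (f e t x); simpl in *; lra.
Qed.

Lemma limsup_le f t x L M : hr_limsup f t x L -> ev_lt f t x M -> Rbar_le L (Finite M).
Proof.
  intros [_ H2] [d [Hd H]].
  assert (Hno : forall M', Rbar_lt (Finite M') L -> M' < M).
  { intros M' HM'. destruct (Rlt_or_le M' M) as [|HMM]; auto. exfalso.
    destruct (H2 M' HM' d Hd) as [e [t' [x' [He [Ht' [Htt [Hxx Hf]]]]]]].
    specialize (H e t' x' (conj He (conj Ht' (conj Htt Hxx)))).
    destruct (f e t' x'); simpl in *; lra. }
  destruct L as [l| |]; simpl; auto.
  - destruct (Rle_or_lt l M) as [|Hl]; auto. specialize (Hno ((l + M) / 2)). simpl in Hno. lra.
  - specialize (Hno M I). lra.
Qed.

Lemma liminf_ge f t x L M : hr_liminf f t x L -> ev_gt f t x M -> Rbar_le (Finite M) L.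
Proof.
  intros [_ H2] [d [Hd H]].
  assert (Hno : forall M', Rbar_lt L (Finite M') -> M < M').
  { intros M' HM'. destruct (Rlt_or_le M M') as [|HMM]; auto. exfalso.
    destruct (H2 M' HM' d Hd) as [e [t' [x' [He [Ht' [Htt [Hxx Hf]]]]]]].
    specialize (H e t' x' (conj He (conj Ht' (conj Htt Hxx)))).
    destruct (f e t' x'); simpl in *; lra. }
  destruct L as [l| |]; simpl; auto.
  - destruct (Rle_or_lt M l) as [|Hl]; auto. specialize (Hno ((l + M) / 2)). simpl in Hno. lra.
  - specialize (Hno M I). lra.
Qed.

Lemma limsup_ge f t x L M : 0 <= t -> hr_limsup f t x L -> ev_gt f t x M -> Rbar_le (Finite M) L.
Proof.
  intros Ht HL Hg. destruct L as [l| |]; simpl; auto.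
  - destruct (Rle_or_lt M l) as [|Hl]; auto. exfalso.
    apply (ev_lt_gt_incompatible f t x ((l + M)/2) M Ht); [lra | | auto].
    apply (limsup_ev f t x (Finite l)); auto. simpl; lra.
  - apply (ev_lt_gt_incompatible f t x (M - 1) M Ht); [lra | | auto].
    apply (limsup_ev f t x m_infty); auto. exact I.
Qed.

Lemma liminf_le f t x L M : 0 <= t -> hr_liminf f t x L -> ev_lt f t x M -> Rbar_le L (Finite M).
Proof.
  intros Ht HL Hg. destruct L as [l| |]; simpl; auto.
  - destruct (Rle_or_lt l M) as [|Hl]; auto. exfalso.
    apply (ev_lt_gt_incompatible f t x M ((l + M)/2) Ht); [lra | auto |].
    apply (liminf_ev f t x (Finite l)); auto. simpl; lra.
  - apply (ev_lt_gt_incompatible f t x M (M + 1) Ht); [lra | auto |].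
    apply (liminf_ev f t x p_infty); auto. exact I.
Qed.

(** Half-relaxed limits are semicontinuous: an eventual bound at (t0,x0) is an
    eventual bound at every nearby point. *)
Lemma near_shift d t0 x0 t x e t' x' : Rabs (t - t0) < d/2 -> Rabs (x - x0) < d/2 ->
  near (d/2) t x e t' x' -> near d t0 x0 e t' x'.
Proof.
  intros H1 H2 [He [Ht [Htt Hxx]]]. unfold near.
  split; [lra|]. split; [auto|]. split.
  - replace (t' - t0) with ((t' - t) + (t - t0)) by ring. eapply Rle_lt_trans; [apply Rabs_triang | lra].
  - replace (x' - x0) with ((x' - x) + (x - x0)) by ring. eapply Rle_lt_trans; [apply Rabs_triang | lra].
Qed.

Lemma usc_of_limsup (f : R -> R -> R -> Rbar) (w : R -> R -> Rbar) :
  (forall t x, 0 <= t -> hr_limsup f t x (w t x)) -> usc_on_closed_half w.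
Proof.
  intros Hw t0 x0 Ht0 M HM.
  assert (HM' : exists M', M' < M /\ Rbar_lt (w t0 x0) (Finite M')).
  { destruct (w t0 x0) as [l| |]; simpl in *; try tauto.
    - exists ((l + M)/2). split; lra.
    - exists (M - 1). split; [lra | exact I]. }
  destruct HM' as [M' [HM1 HM2]].
  destruct (limsup_ev _ _ _ _ _ (Hw t0 x0 Ht0) HM2) as [d [Hd H]].
  exists (d/2). split; [lra|]. intros t x Ht Htt Hxx.
  assert (Hle : Rbar_le (w t x) (Finite M')).
  { apply (limsup_le f t x _ M' (Hw t x Ht)). exists (d/2). split; [lra|].
    intros e t' x' Hn. apply H. eapply near_shift; eauto. }
  eapply Rbar_le_lt_trans; [exact Hle | simpl; lra].
Qed.

Lemma lsc_of_liminf (f : R -> R -> R -> Rbar) (w : R -> R -> Rbar) :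
  (forall t x, 0 <= t -> hr_liminf f t x (w t x)) -> lsc_on_closed_half w.
Proof.
  intros Hw t0 x0 Ht0 M HM.
  assert (HM' : exists M', M < M' /\ Rbar_lt (Finite M') (w t0 x0)).
  { destruct (w t0 x0) as [l| |]; simpl in *; try tauto.
    - exists ((l + M)/2). split; lra.
    - exists (M + 1). split; [lra | exact I]. }
  destruct HM' as [M' [HM1 HM2]].
  destruct (liminf_ev _ _ _ _ _ (Hw t0 x0 Ht0) HM2) as [d [Hd H]].
  exists (d/2). split; [lra|]. intros t x Ht Htt Hxx.
  assert (Hle : Rbar_le (Finite M') (w t x)).
  { apply (liminf_ge f t x _ M' (Hw t x Ht)). exists (d/2). split; [lra|].
    intros e t' x' Hn. apply H. eapply near_shift; eauto. }
  eapply Rbar_lt_le_trans; [|exact Hle]. simpl; lra.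
Qed.

(** A bounded family has finite half-relaxed limits (completeness of R). *)
Lemma exists_limsup (g : R -> R -> R -> R) t0 x0 B : 0 <= t0 ->
  (forall e t x, 0 < e -> 0 <= t -> Rabs (g e t x) <= B) ->
  exists L, hr_limsup (fun e t x => Finite (g e t x)) t0 x0 (Finite L).
Proof.
  intros Ht0 Hb.
  set (E := fun M => forall dl, 0 < dl -> exists e t' x', near dl t0 x0 e t' x' /\ M < g e t' x').
  assert (HE : E (-B - 1)).
  { intros dl Hdl. exists (dl/2), t0, x0. split.
    - unfold near. rewrite !Rminus_diag, Rabs_R0. repeat split; lra.
    - specialize (Hb (dl/2) t0 x0 ltac:(lra) Ht0). apply Rabs_le_bounds in Hb. lra. }
  assert (Hbd : bound E).
  { exists B. intros M HM. destruct (HM 1 ltac:(lra)) as [e [t' [x' [[He [Ht' _]] HMg]]]].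
    specialize (Hb e t' x' ltac:(lra) Ht'). apply Rabs_le_bounds in Hb. lra. }
  destruct (completeness E Hbd (ex_intro _ _ HE)) as [L [HL1 HL2]].
  exists L. split.
  - intros M HM. simpl in HM. set (m := (L + M)/2).
    assert (Hm : ~ E m) by (intro Hm; specialize (HL1 m Hm); unfold m in HL1; lra).
    unfold E in Hm. apply not_all_ex_not in Hm. destruct Hm as [dl Hdl].
    apply imply_to_and in Hdl. destruct Hdl as [Hdl Hn].
    exists dl. split; auto. intros e t' x' He Ht' Htt Hxx. simpl.
    destruct (Rle_or_lt (g e t' x') m) as [|Hlt]; [unfold m in *; lra|].
    exfalso. apply Hn. exists e, t', x'. split; auto. repeat split; tauto.
  - intros M HM dl Hdl. simpl in HM.
    assert (Hex : exists M', E M' /\ M < M').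
    { apply NNPP. intro Hn. assert (HMub : is_upper_bound E M).
      { intros M' HM'. destruct (Rle_or_lt M' M); auto. exfalso. apply Hn. exists M'. auto. }
      specialize (HL2 M HMub). lra. }
    destruct Hex as [M' [HM' HMM']]. destruct (HM' dl Hdl) as [e [t' [x' [[He [Ht' [Htt Hxx]]] Hg]]]].
    exists e, t', x'. repeat split; try tauto. simpl. lra.
Qed.

Lemma exists_liminf (g : R -> R -> R -> R) t0 x0 B : 0 <= t0 ->
  (forall e t x, 0 < e -> 0 <= t -> Rabs (g e t x) <= B) ->
  exists l, hr_liminf (fun e t x => Finite (g e t x)) t0 x0 (Finite l).
Proof.
  intros Ht0 Hb. destruct (exists_limsup (fun e t x => - g e t x) t0 x0 B Ht0) as [L [H1 H2]].
  { intros. rewrite Rabs_Ropp. auto. }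
  exists (-L). split.
  - intros M HM. simpl in HM. destruct (H1 (-M)) as [dl [Hdl H]]; [simpl; lra|].
    exists dl. split; [exact Hdl|]. intros e t' x' H0 H3 H4 H5. specialize (H e t' x' H0 H3 H4 H5). simpl in *. lra.
  - intros M HM dl Hdl. simpl in HM. destruct (H2 (-M) ltac:(simpl; lra) dl Hdl) as [e [t' [x' [A [B' [C [D E]]]]]]].
    exists e, t', x'. repeat (split; [tauto|]). simpl in *. lra.
Qed.

Lemma v_eventual_bounds d r a b u0 v0 u v c1 ct1 t0 x0 : is_solution_11 d r a b u0 v0 u v ->
  cond31 v c1 ct1 -> 0 < t0 -> forall eta, 0 < eta ->
  ev_lt (fun e t x => Finite (resc v e t x)) t0 x0 (chi_le c1 t0 x0 + eta) /\
  ev_gt (fun e t x => Finite (resc v e t x)) t0 x0 (chi_between ct1 c1 t0 x0 - eta).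
Proof.
  intros Hs Hc Ht0 eta Heta.
  destruct (solution_u_facts _ _ _ _ _ _ _ _ Hs) as [B [_ [_ [_ [HB [Hb _]]]]]].
  assert (Hbv : forall e t x, 0 < e -> 0 <= t -> Rabs (resc v e t x) <= B).
  { intros e t x He Ht. unfold resc. apply Hb. apply Rdiv_nonneg; lra. }
  destruct (exists_limsup (resc v) t0 x0 B ltac:(lra) Hbv) as [L HL].
  destruct (exists_liminf (resc v) t0 x0 B ltac:(lra) Hbv) as [l Hl].
  destruct (Hc t0 x0 Ht0 _ _ Hl HL) as [C1 [_ C3]]. simpl in C1, C3.
  split; [apply (limsup_ev _ _ _ _ _ HL) | apply (liminf_ev _ _ _ _ _ Hl)]; simpl; lra.
Qed.

Section LogTransformBounds.

Variables (d r a b : R) (u0 v0 : R -> R) (u v : R -> R -> R).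
Hypothesis Ha : 0 < a.
Hypothesis Hi : H_inf u0 v0.
Hypothesis Hs : is_solution_11 d r a b u0 v0 u v.

(** w^e is eventually bounded below by any negative constant, since u is bounded. *)
Lemma weps_eventually_above t x k : 0 < k -> ev_gt (weps u) t x (-k).
Proof.
  intros Hk. destruct (solution_u_facts _ _ _ _ _ _ _ _ Hs) as [B [_ [_ [_ [HB [Hb _]]]]]].
  assert (HlB : 0 <= ln B)
    by (rewrite <- ln_1; destruct HB as [HB|HB]; [left; apply ln_increasing; lra | rewrite HB; lra]).
  exists (k / (ln B + 1)). split; [apply Rdiv_lt_0_compat; lra|].
  intros e t' x' [He [Ht' _]].
  eapply Rbar_lt_le_trans; [|apply (weps_ge_of_upper u e t' x' B)]; try lra.
  - simpl. assert (e * ln B < k); [|lra].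
    apply Rle_lt_trans with (k / (ln B + 1) * ln B); [apply Rmult_le_compat_r; lra|].
    replace (k / (ln B + 1) * ln B) with (k - k / (ln B + 1)) by (field; lra).
    assert (0 < k / (ln B + 1)) by (apply Rdiv_lt_0_compat; lra). lra.
  - unfold resc. destruct (Hb (t'/e) (x'/e)) as [Hu _]; [apply Rdiv_nonneg; lra|].
    apply Rabs_le_bounds in Hu. lra.
Qed.

(** Upper bound on w^e from the travelling-wave barrier, wherever the rescaled
    point lies in the core |phase| <= 1 of the wave. *)
Lemma weps_wave_bound : exists C1 P, 0 <= C1 /\ 0 < P /\
  forall kap xi c e t' x', 0 < e -> 0 < kap <= 1 -> kap * xi + 2 <= 0 -> 0 <= t' ->
    Rabs (kap * (x' / e - xi - c * (t' / e))) <= 1 ->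
    Rbar_le (weps u e t' x') (Finite (- e * ln P + (C1 + 2 + c * c) * t')).
Proof.
  destruct (u_lower _ _ _ _ _ _ _ _ Ha Hi Hs) as [C1 [th0 [Hth [HC1 Hlow]]]].
  pose proof cos1_sq_pos.
  exists C1, (th0 * (cos 1 * cos 1)). split; [auto|]. split; [nra|].
  intros kap xi c e t' x' He Hkap Hxi Ht' Harg.
  set (K := C1 + 2 + c * c).
  specialize (Hlow kap xi c Hkap Hxi (t' / e) (x' / e) ltac:(apply Rdiv_nonneg; lra)).
  set (Lb := th0 * exp (- K * (t' / e)) * (cos 1 * cos 1)).
  assert (HLb : 0 < Lb) by (unfold Lb; pose proof (exp_pos (- K * (t' / e))); apply Rmult_lt_0_compat; nra).
  assert (HLu : Lb <= resc u e t' x').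
  { unfold resc. eapply Rle_trans; [|exact Hlow]. unfold Lb, cos2_wave. fold K.
    pose proof (exp_pos (- K * (t' / e))).
    apply Rmult_le_compat_l; [nra | apply Q_lower, Harg]. }
  eapply Rbar_le_trans; [apply (weps_le_of_lower u e t' x' Lb He HLb HLu)|]. simpl. right.
  unfold Lb. rewrite (Rmult_comm th0 (exp _)), Rmult_assoc, ln_mult, ln_exp; [field; lra | apply exp_pos | nra].
Qed.

(** Initial values: w^e -> 0 on {x < 0} (where u0 >= th0) ... *)
Lemma weps_eventually_below_initial_neg x k : x < 0 -> 0 < k -> ev_lt (weps u) 0 x k.
Proof.
  intros Hx Hk. destruct weps_wave_bound as [C1 [P [HC1 [HP Hw]]]].
  set (K := C1 + 2 + 0 * 0). assert (HK : 0 < K) by (unfold K; lra).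
  set (A := Rabs (ln P) + 1). assert (HA : 0 < A) by (unfold A; pose proof (Rabs_pos (ln P)); lra).
  set (del := Rmin (- x / 2) (Rmin (k / (2 * K)) (k / (2 * A)))).
  assert (H1 : 0 < k / (2 * K)) by (apply Rdiv_lt_0_compat; lra).
  assert (H2 : 0 < k / (2 * A)) by (apply Rdiv_lt_0_compat; lra).
  assert (Hd : 0 < del) by (unfold del; repeat apply Rmin_glb_lt; lra).
  assert (Hd1 : del <= - x / 2) by apply Rmin_l.
  assert (Hd2 : del <= k / (2 * K)) by (eapply Rle_trans; [apply Rmin_r | apply Rmin_l]).
  assert (Hd3 : del <= k / (2 * A)) by (eapply Rle_trans; [apply Rmin_r | apply Rmin_r]).
  exists del. split; auto.
  intros e t' x' [He [Ht' [Htt Hxx]]]. rewrite Rminus_0_r, Rabs_pos_eq in Htt by lra.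
  assert (Hkap : 0 < 2 * e / (- x) <= 1).
  { split; [apply Rdiv_lt_0_compat; lra|].
    apply (Rmult_le_reg_r (-x)); [lra|]. unfold Rdiv. rewrite Rmult_assoc, Rinv_l by lra. lra. }
  assert (Harg : Rabs (2 * e / - x * (x' / e - x / e - 0 * (t' / e))) <= 1).
  { replace (2 * e / - x * (x' / e - x / e - 0 * (t' / e))) with ((x' - x) * (2 / (- x))) by (field; lra).
    rewrite Rabs_mult, (Rabs_pos_eq (2 / - x)) by (apply Rdiv_nonneg; lra).
    apply (Rmult_le_reg_r (-x)); [lra|]. unfold Rdiv. rewrite Rmult_assoc, Rmult_assoc, Rinv_l by lra. lra. }
  eapply Rbar_le_lt_trans;
    [apply (Hw (2 * e / (- x)) (x / e) 0 e t' x' (proj1 He) Hkap ltac:(right; field; lra) Ht' Harg)|].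
  simpl. fold K.
  assert (K * t' < k / 2).
  { apply Rlt_le_trans with (K * (k / (2 * K))); [apply Rmult_lt_compat_l; lra|].
    right. field. lra. }
  assert (- e * ln P <= e * A).
  { pose proof (Rle_abs (- ln P)) as Hl. rewrite Rabs_Ropp in Hl.
    replace (- e * ln P) with (e * (- ln P)) by ring. apply Rmult_le_compat_l; unfold A; lra. }
  assert (e * A < k / 2).
  { apply Rlt_le_trans with (k / (2 * A) * A); [apply Rmult_lt_compat_r; lra | right; field; lra]. }
  lra.
Qed.

(** ... and w^e -> +oo on {x > 0}, by the exponential barrier of slope 4M/x. *)
Lemma weps_eventually_above_initial_pos x M : 0 < x -> ev_gt (weps u) 0 x M.
Proof.
  intros Hx. destruct (u_upper _ _ _ _ _ _ _ _ Ha Hi Hs) as [C0 [x0 [HC0 Hup]]].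
  set (m := Rabs M + 1). assert (Hm : 0 < m) by (unfold m; pose proof (Rabs_pos M); lra).
  set (lam := 4 * m / x). assert (Hlam : 0 < lam) by (unfold lam; apply Rdiv_lt_0_compat; lra).
  set (mu := lam * lam + C0). assert (Hmu : 0 <= mu) by (unfold mu; nra).
  set (A := Rabs x0 + 1). assert (HA : 0 < A) by (unfold A; pose proof (Rabs_pos x0); lra).
  set (del := Rmin (x / 2) (Rmin (m / (2 * lam * A)) (m / (2 * (mu + 1))))).
  assert (H1 : 0 < m / (2 * lam * A)) by (apply Rdiv_lt_0_compat; nra).
  assert (H2 : 0 < m / (2 * (mu + 1))) by (apply Rdiv_lt_0_compat; lra).
  assert (Hd : 0 < del) by (unfold del; repeat apply Rmin_glb_lt; lra).
  assert (Hd1 : del <= x / 2) by apply Rmin_l.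
  assert (Hd2 : del <= m / (2 * lam * A)) by (eapply Rle_trans; [apply Rmin_r | apply Rmin_l]).
  assert (Hd3 : del <= m / (2 * (mu + 1))) by (eapply Rle_trans; [apply Rmin_r | apply Rmin_r]).
  exists del. split; auto.
  intros e t' x' [He [Ht' [Htt Hxx]]]. rewrite Rminus_0_r, Rabs_pos_eq in Htt by lra.
  apply Rabs_def2 in Hxx. destruct Hxx as [_ Hx'].
  specialize (Hup lam Hlam (t' / e) (x' / e) ltac:(apply Rdiv_nonneg; lra)).
  eapply Rbar_lt_le_trans; [|apply (weps_ge_of_upper u e t' x' _ (proj1 He) (exp_pos _) Hup)]. simpl.
  rewrite ln_exp. fold mu.
  replace (- e * (lam * x0 + mu * (t' / e) + - lam * (x' / e))) with (lam * x' - e * lam * x0 - mu * t')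
    by (field; lra).
  assert (lam * x' > 2 * m).
  { apply Rlt_gt, Rle_lt_trans with (lam * (x / 2)); [right; unfold lam; field; lra|].
    apply Rmult_lt_compat_l; lra. }
  assert (e * lam * x0 < m / 2).
  { apply Rle_lt_trans with (e * lam * A).
    - apply Rmult_le_compat_l; [nra|]. unfold A. pose proof (Rle_abs x0). lra.
    - apply Rlt_le_trans with (m / (2 * lam * A) * lam * A); [|right; field; lra].
      apply Rmult_lt_compat_r; [auto|]. apply Rmult_lt_compat_r; lra. }
  assert (mu * t' < m / 2).
  { apply Rle_lt_trans with ((mu + 1) * t'); [nra|].
    apply Rlt_le_trans with ((mu + 1) * (m / (2 * (mu + 1)))); [apply Rmult_lt_compat_l; lra | right; field; lra]. }
  assert (M < m) by (unfold m; pose proof (Rle_abs M); lra).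
  lra.
Qed.

(** For t0 > 0, w^e is locally bounded above: the wave of speed (x0 + 2)/t0
    started at -2 covers a neighbourhood of (t0,x0). *)
Lemma weps_eventually_bounded t0 x0 : 0 < t0 -> exists Mb, ev_lt (weps u) t0 x0 Mb.
Proof.
  intros Ht0. destruct weps_wave_bound as [C1 [P [HC1 [HP Hw]]]].
  set (c := (x0 + 2) / t0).
  set (K := C1 + 2 + c * c). assert (HK : 0 < K) by (unfold K; nra).
  exists (Rabs (ln P) + K * (t0 + 1) + 1).
  set (Ac := Rabs c + 1). assert (HAc : 0 < Ac) by (unfold Ac; pose proof (Rabs_pos c); lra).
  set (del := Rmin 1 (1 / (2 * Ac))).
  assert (Hc : 0 < 1 / (2 * Ac)) by (apply Rdiv_lt_0_compat; lra).
  assert (Hd : 0 < del) by (unfold del; apply Rmin_glb_lt; lra).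
  assert (Hd1 : del <= 1) by apply Rmin_l.
  assert (Hd2 : del <= 1 / (2 * Ac)) by apply Rmin_r.
  exists del. split; auto.
  intros e t' x' [He [Ht' [Htt Hxx]]].
  assert (Harg : Rabs (e * (x' / e - -2 / e - c * (t' / e))) <= 1).
  { replace (e * (x' / e - -2 / e - c * (t' / e))) with ((x' - x0) - c * (t' - t0)) by (unfold c; field; lra).
    eapply Rle_trans; [apply Rabs_triang|]. rewrite Rabs_Ropp, Rabs_mult.
    assert (Rabs c * Rabs (t' - t0) <= Rabs c * del) by (apply Rmult_le_compat_l; [apply Rabs_pos | lra]).
    assert (Ac * del <= 1/2).
    { apply Rle_trans with (Ac * (1 / (2 * Ac))); [apply Rmult_le_compat_l; lra | right; field; lra]. }
    unfold Ac in *. nra. }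
  eapply Rbar_le_lt_trans; [apply (Hw e (-2 / e) c e t' x' (proj1 He) ltac:(lra) ltac:(right; field; lra) Ht' Harg)|].
  simpl. fold K.
  apply Rabs_def2 in Htt.
  assert (- e * ln P <= Rabs (ln P)).
  { pose proof (Rle_abs (- ln P)) as Hl. rewrite Rabs_Ropp in Hl. pose proof (Rabs_pos (ln P)).
    assert (e * (- ln P) <= e * Rabs (ln P)) by (apply Rmult_le_compat_l; lra).
    assert (e * Rabs (ln P) <= 1 * Rabs (ln P)) by (apply Rmult_le_compat_r; lra). lra. }
  assert (K * t' <= K * (t0 + 1)) by (apply Rmult_le_compat_l; lra).
  lra.
Qed.

Lemma initial_values wstar wlow :
  (forall t x, 0 <= t -> hr_limsup (weps u) t x (wstar t x)) ->
  (forall t x, 0 <= t -> hr_liminf (weps u) t x (wlow t x)) ->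
  (forall x, x < 0 -> wstar 0 x = Finite 0 /\ wlow 0 x = Finite 0) /\
  (forall x, 0 < x -> wlow 0 x = p_infty).
Proof.
  intros Hws Hwl. split.
  - intros x Hx. split; apply Rbar_eq_0_of_bounds; intros k Hk.
    + apply (limsup_le (weps u) 0 x); [apply Hws; lra | apply weps_eventually_below_initial_neg; auto].
    + apply (limsup_ge (weps u) 0 x); [lra | apply Hws; lra | apply weps_eventually_above; auto].
    + apply (liminf_le (weps u) 0 x); [lra | apply Hwl; lra | apply weps_eventually_below_initial_neg; auto].
    + apply (liminf_ge (weps u) 0 x); [apply Hwl; lra | apply weps_eventually_above; auto].
  - intros x Hx. apply Rbar_eq_pinf_of_bounds. intro M.
    apply (liminf_ge (weps u) 0 x); [apply Hwl; lra | apply weps_eventually_above_initial_pos; auto].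
Qed.

End LogTransformBounds.

Lemma mvt_affine_bound f f' a b p eta :
  (forall z, Rmin a b <= z <= Rmax a b -> derivable_pt_lim f z (f' z) /\ Rabs (f' z - p) <= eta) ->
  Rabs (f b - f a - p * (b - a)) <= eta * Rabs (b - a).
Proof.
  intros H. destruct (Rtotal_order a b) as [Hab|[Hab|Hab]].
  - destruct (MVT_cor2 f f' a b Hab) as [c [Hc1 Hc2]].
    { intros z Hz. apply H. rewrite Rmin_left, Rmax_right by lra. auto. }
    rewrite Hc1. replace (f' c * (b - a) - p * (b - a)) with ((f' c - p) * (b - a)) by ring.
    rewrite Rabs_mult. apply Rmult_le_compat_r; [apply Rabs_pos|].
    apply H. rewrite Rmin_left, Rmax_right by lra. lra.
  - subst. rewrite !Rminus_diag, Rmult_0_r, Rminus_0_r, Rabs_R0. lra.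
  - destruct (MVT_cor2 f f' b a Hab) as [c [Hc1 Hc2]].
    { intros z Hz. apply H. rewrite Rmin_right, Rmax_left by lra. auto. }
    replace (f b - f a - p * (b - a)) with (- ((f a - f b) - p * (a - b))) by ring.
    rewrite Rabs_Ropp, Hc1. replace (f' c * (a - b) - p * (a - b)) with ((f' c - p) * (a - b)) by ring.
    rewrite Rabs_mult, <- (Rabs_Ropp (b - a)). replace (- (b - a)) with (a - b) by ring.
    apply Rmult_le_compat_r; [apply Rabs_pos|]. apply H. rewrite Rmin_right, Rmax_left by lra. lra.
Qed.

Lemma between_close a b z : Rmin a b <= z <= Rmax a b -> Rabs (z - a) <= Rabs (b - a).
Proof. unfold Rmin, Rmax. destruct Rle_dec; intros; unfold Rabs; repeat destruct Rcase_abs; lra. Qed.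

(** First-order Taylor bound for a C^1 test function near (t0,x0), via the
    mean value theorem in each variable. *)
Lemma C1_linearization phi phit phix t0 x0 : C1_test phi phit phix -> 0 < t0 -> forall eta, 0 < eta ->
  exists r, 0 < r /\ r < t0 /\ forall t x, Rabs (t - t0) < r -> Rabs (x - x0) < r ->
    Rabs (phi t x - phi t0 x0 - phit t0 x0 * (t - t0) - phix t0 x0 * (x - x0))
      <= eta * (Rabs (t - t0) + Rabs (x - x0)).
Proof.
  intros [_ [Hpt [Hpx Hder]]] Ht0 eta Heta.
  destruct (Hpt t0 x0 Ht0 eta Heta) as [d1 [Hd1 H1]].
  destruct (Hpx t0 x0 Ht0 eta Heta) as [d2 [Hd2 H2]].
  set (r := Rmin (Rmin d1 d2) (t0/2)).
  assert (Hr : 0 < r) by (unfold r; repeat apply Rmin_glb_lt; lra).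
  assert (Hr1 : r <= d1) by (unfold r; eapply Rle_trans; [apply Rmin_l | apply Rmin_l]).
  assert (Hr2 : r <= d2) by (unfold r; eapply Rle_trans; [apply Rmin_l | apply Rmin_r]).
  assert (Hr3 : r <= t0/2) by (unfold r; apply Rmin_r).
  exists r. split; [exact Hr|]. split; [lra|]. intros t x Ht Hx.
  assert (A : Rabs (phi t x - phi t0 x - phit t0 x0 * (t - t0)) <= eta * Rabs (t - t0)).
  { apply (mvt_affine_bound (fun s => phi s x) (fun s => phit s x)). intros z Hz.
    pose proof (between_close _ _ _ Hz) as Hzc.
    assert (Hz0 : 0 < z) by (apply Rabs_le_bounds in Hzc; lra).
    split; [apply (proj1 (Hder z x Hz0))|]. left. apply H1; [exact Hz0 | lra | lra]. }
  assert (B : Rabs (phi t0 x - phi t0 x0 - phix t0 x0 * (x - x0)) <= eta * Rabs (x - x0)).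
  { apply (mvt_affine_bound (fun s => phi t0 s) (fun s => phix t0 s)). intros z Hz.
    pose proof (between_close _ _ _ Hz).
    split; [apply (proj2 (Hder t0 z Ht0))|]. left. apply H2; [exact Ht0 | rewrite Rminus_diag, Rabs_R0; lra | lra]. }
  replace (phi t x - phi t0 x0 - phit t0 x0 * (t - t0) - phix t0 x0 * (x - x0)) with
    ((phi t x - phi t0 x - phit t0 x0 * (t - t0)) + (phi t0 x - phi t0 x0 - phix t0 x0 * (x - x0))) by ring.
  eapply Rle_trans; [apply Rabs_triang | lra].
Qed.

Definition square (t0 x0 r t x : R) : Prop := box (t0 - r) (t0 + r) (x0 - r) (x0 + r) t x.

Lemma square_abs t0 x0 r t x : square t0 x0 r t x <-> Rabs (t - t0) <= r /\ Rabs (x - x0) <= r.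
Proof.
  unfold square, box. split.
  - intros [Ht Hx]. split; apply Rabs_le; lra.
  - intros [Ht Hx]. apply Rabs_le_bounds in Ht. apply Rabs_le_bounds in Hx. split; split; lra.
Qed.

Lemma inner_neighbourhood t0 x0 r ts xs : Rabs (ts - t0) < r / 2 -> Rabs (xs - x0) < r / 2 ->
  exists rho, 0 < rho /\ forall t x, Rabs (t - ts) < rho -> Rabs (x - xs) < rho -> square t0 x0 r t x.
Proof.
  intros Ht Hx. exists (r / 2 - Rmax (Rabs (ts - t0)) (Rabs (xs - x0))).
  pose proof (Rmax_l (Rabs (ts - t0)) (Rabs (xs - x0))). pose proof (Rmax_r (Rabs (ts - t0)) (Rabs (xs - x0))).
  split; [unfold Rmax; destruct Rle_dec; lra|].
  intros t x Htt Hxx. apply square_abs. pose proof (Rabs_pos (ts - t0)). pose proof (Rabs_pos (xs - x0)). split.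
  - replace (t - t0) with ((t - ts) + (ts - t0)) by ring. eapply Rle_trans; [apply Rabs_triang | lra].
  - replace (x - x0) with ((x - xs) + (xs - x0)) by ring. eapply Rle_trans; [apply Rabs_triang | lra].
Qed.

Lemma interior_argmax (Phi : R -> R -> R) t0 x0 r t1 x1 : 0 < r ->
  cont_box (t0 - r) (t0 + r) (x0 - r) (x0 + r) Phi -> square t0 x0 r t1 x1 ->
  (forall t x, square t0 x0 r t x -> (r / 2 <= Rabs (t - t0) \/ r / 2 <= Rabs (x - x0)) ->
     Phi t x < Phi t1 x1) ->
  exists ts xs, Rabs (ts - t0) < r / 2 /\ Rabs (xs - x0) < r / 2 /\
    forall t x, square t0 x0 r t x -> Phi t x <= Phi ts xs.
Proof.
  intros Hr Hc H1 Hann.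
  destruct (cont_box_argmax (t0 - r) (t0 + r) (x0 - r) (x0 + r) Phi ltac:(lra) ltac:(lra) Hc) as [ts [xs [Hs Hmax]]].
  exists ts, xs.
  assert (Hge : Phi t1 x1 <= Phi ts xs) by (apply Hmax; exact H1).
  destruct (Rlt_or_le (Rabs (ts - t0)) (r / 2)) as [Ht|Ht];
  destruct (Rlt_or_le (Rabs (xs - x0)) (r / 2)) as [Hx|Hx];
    try (specialize (Hann ts xs Hs ltac:(tauto)); lra).
  repeat split; auto.
Qed.

Definition cone (W p q c t0 x0 t x : R) : R :=
  W + p * (t - t0) + q * (x - x0) + c * (Rabs (t - t0) + Rabs (x - x0)).

Lemma cone_lipschitz W p q c t0 x0 t x t' x' :
  cone W p q c t0 x0 t x <= cone W p q c t0 x0 t' x' + (Rabs p + Rabs q + Rabs c) * (Rabs (t - t') + Rabs (x - x')).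
Proof.
  unfold cone.
  assert (Hp : p * (t - t0) - p * (t' - t0) <= Rabs p * Rabs (t - t')).
  { rewrite <- Rabs_mult. replace (p * (t - t0) - p * (t' - t0)) with (p * (t - t')) by ring. apply Rle_abs. }
  assert (Hq : q * (x - x0) - q * (x' - x0) <= Rabs q * Rabs (x - x')).
  { rewrite <- Rabs_mult. replace (q * (x - x0) - q * (x' - x0)) with (q * (x - x')) by ring. apply Rle_abs. }
  assert (Hd : Rabs (Rabs (t - t0) + Rabs (x - x0) - (Rabs (t' - t0) + Rabs (x' - x0)))
    <= Rabs (t - t') + Rabs (x - x')).
  { apply Rabs_le. pose proof (Rabs_triang_inv (t - t0) (t' - t0)). pose proof (Rabs_triang_inv (t' - t0) (t - t0)).
    pose proof (Rabs_triang_inv (x - x0) (x' - x0)). pose proof (Rabs_triang_inv (x' - x0) (x - x0)).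
    replace (t - t0 - (t' - t0)) with (t - t') in * by ring. replace (x - x0 - (x' - x0)) with (x - x') in * by ring.
    replace (t' - t0 - (t - t0)) with (- (t - t')) in * by ring.
    replace (x' - x0 - (x - x0)) with (- (x - x')) in * by ring.
    rewrite Rabs_Ropp in *. split; lra. }
  assert (Hc : c * (Rabs (t - t0) + Rabs (x - x0)) - c * (Rabs (t' - t0) + Rabs (x' - x0))
    <= Rabs c * (Rabs (t - t') + Rabs (x - x'))).
  { eapply Rle_trans; [apply Rle_abs|]. rewrite <- Rmult_minus_distr_l, Rabs_mult.
    apply Rmult_le_compat_l; [apply Rabs_pos | exact Hd]. }
  pose proof (Rabs_pos (t - t')). pose proof (Rabs_pos (x - x')).
  assert (0 <= Rabs p * Rabs (x - x')) by (apply Rmult_le_pos; apply Rabs_pos).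
  assert (0 <= Rabs q * Rabs (t - t')) by (apply Rmult_le_pos; apply Rabs_pos).
  assert (0 <= Rabs c * (Rabs (t - t') + Rabs (x - x'))) by (apply Rmult_le_pos; [apply Rabs_pos | lra]).
  nra.
Qed.

(** This is where compactness of the square enters the half-relaxed limits. *)
Lemma uniform_eventual_bound (Bnd : R -> R -> R -> R -> Prop) (h : R -> R -> R) t0 x0 r Lh kap :
  0 < r -> r < t0 -> 0 <= Lh -> 0 < kap ->
  (forall e t x c c', c <= c' -> Bnd e t x c -> Bnd e t x c') ->
  (forall t x, square t0 x0 r t x -> exists dl, 0 < dl /\
     forall e t' x', near dl t x e t' x' -> Bnd e t' x' (h t x + kap / 2)) ->
  (forall t x t' x', h t x <= h t' x' + Lh * (Rabs (t - t') + Rabs (x - x'))) ->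
  exists d, 0 < d /\ forall e t x, 0 < e < d -> square t0 x0 r t x -> Bnd e t x (h t x + kap).
Proof.
  intros Hr Hrt HL Hk Hmono Hloc Hh.
  assert (Hg : forall t x, exists dl, 0 < dl /\ (square t0 x0 r t x ->
     forall e t' x', near dl t x e t' x' -> Bnd e t' x' (h t x + kap / 2))).
  { intros t x. destruct (classic (square t0 x0 r t x)) as [Hb|Hb]; [|exists 1; split; [lra | tauto]].
    destruct (Hloc t x Hb) as [dl [Hdl H]]. exists dl. split; auto. }
  destruct (choice2 _ Hg) as [G HG].
  set (c := kap / (4 * (Lh + 1))). assert (Hc : 0 < c) by (unfold c; apply Rdiv_lt_0_compat; lra).
  destruct (cousin_rectangle (t0 - r) (t0 + r) (x0 - r) (x0 + r) (fun t x => Rmin (G t x) c)) as [d [Hd Hd2]].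
  { intros t x. apply Rmin_glb_lt; auto. apply HG. }
  exists d. split; auto. intros e t x He [Ht Hx].
  destruct (Hd2 t x Ht Hx) as [ct [cx [Hct [Hcx [H1 [H2 H3]]]]]].
  assert (Hm1 : Rmin (G ct cx) c <= G ct cx) by apply Rmin_l.
  assert (Hm2 : Rmin (G ct cx) c <= c) by apply Rmin_r.
  destruct (HG ct cx) as [_ HG2].
  apply (Hmono _ _ _ (h ct cx + kap / 2)).
  - specialize (Hh ct cx t x).
    assert (Lh * (Rabs (ct - t) + Rabs (cx - x)) <= Lh * (2 * c)).
    { apply Rmult_le_compat_l; auto. rewrite (Rabs_minus_sym ct), (Rabs_minus_sym cx). lra. }
    assert (Lh * (2 * c) <= kap / 2).
    { unfold c. replace (Lh * (2 * (kap / (4 * (Lh + 1))))) with (kap / 2 - kap / 2 / (Lh + 1)) by (field; lra).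
      assert (0 < kap / 2 / (Lh + 1)) by (apply Rdiv_lt_0_compat; lra). lra. }
    lra.
  - apply HG2; [split; auto|]. unfold near. repeat split; lra.
Qed.

Definition S (sg s : R) := sqrt (sg * sg + s * s).

Section SmoothAbs.

Variable sg : R.
Hypothesis Hsg : 0 < sg.

Lemma S_pos s : 0 < S sg s.
Proof. unfold S. apply sqrt_lt_R0. nra. Qed.

Lemma S_sq s : S sg s * S sg s = sg * sg + s * s.
Proof. unfold S. apply sqrt_sqrt. nra. Qed.

Lemma S_abs_bounds s : Rabs s <= S sg s <= Rabs s + sg.
Proof.
  pose proof (S_pos s). pose proof (S_sq s). pose proof (Rabs_pos s).
  assert (Rabs s * Rabs s = s * s) by (rewrite <- Rabs_mult; apply Rabs_pos_eq; nra).
  split; nra.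
Qed.

Lemma derivable_pt_lim_S s : derivable_pt_lim (S sg) s (s / S sg s).
Proof.
  pose proof (S_pos s). unfold S in *.
  apply (derivable_pt_lim_val _ _ (/ (2 * sqrt (sg * sg + s * s)) * (0 + (1 * s + s * 1)))); [field; lra|].
  apply (derivable_pt_lim_comp (fun y => sg * sg + y * y) sqrt).
  - apply derivable_pt_lim_plus; [apply derivable_pt_lim_const|].
    apply (derivable_pt_lim_mult (fun y => y) (fun y => y)); apply derivable_pt_lim_id.
  - apply derivable_pt_lim_sqrt. nra.
Qed.

Lemma derivable_pt_lim_dS s :
  derivable_pt_lim (fun y => y / S sg y) s (sg * sg / (S sg s * S sg s * S sg s)).
Proof.
  pose proof (S_pos s). pose proof (S_sq s).
  eapply derivable_pt_lim_val; [|apply (derivable_pt_lim_div (fun y => y) (S sg));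
    [apply derivable_pt_lim_id | apply derivable_pt_lim_S | lra]].
  unfold Rsqr. replace (sg * sg) with (S sg s * S sg s - s * s) by lra. field. lra.
Qed.

Lemma dS_bound s : Rabs (s / S sg s) <= 1.
Proof.
  pose proof (S_pos s). destruct (S_abs_bounds s).
  unfold Rdiv. rewrite Rabs_mult, (Rabs_pos_eq (/ _)) by (left; apply Rinv_0_lt_compat; auto).
  apply (Rmult_le_reg_r (S sg s)); auto. rewrite Rmult_assoc, Rinv_l by lra. lra.
Qed.

Lemma ddS_bound s : 0 <= sg * sg / (S sg s * S sg s * S sg s) <= 1 / sg.
Proof.
  pose proof (S_pos s). pose proof (S_sq s).
  assert (Hsg3 : sg * sg * sg <= S sg s * S sg s * S sg s).
  { assert (sg <= S sg s) by nra. assert (sg * sg <= S sg s * S sg s) by nra. apply Rmult_le_compat; nra. }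
  assert (0 < S sg s * S sg s * S sg s) by (repeat apply Rmult_lt_0_compat; auto).
  split; [apply Rdiv_nonneg; nra|].
  apply (Rmult_le_reg_r (S sg s * S sg s * S sg s)); auto.
  replace (sg * sg / (S sg s * S sg s * S sg s) * (S sg s * S sg s * S sg s)) with (sg * sg) by (field; lra).
  apply (Rmult_le_reg_l sg); auto.
  replace (sg * (1 / sg * (S sg s * S sg s * S sg s))) with (S sg s * S sg s * S sg s) by (field; lra).
  lra.
Qed.

End SmoothAbs.

(** The smooth penalty g = p dt + q dx + c (S dt + S dx), a C^2 approximation
    of the cone with vertex (t0,x0). *)
Definition penalty (p q c sg t0 x0 t x : R) :=
  p * (t - t0) + q * (x - x0) + c * (S sg (t - t0) + S sg (x - x0)).

Lemma penalty_near_cone p q c sg t0 x0 t x : 0 < sg ->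
  Rabs (penalty p q c sg t0 x0 t x - cone 0 p q c t0 x0 t x) <= 2 * Rabs c * sg.
Proof.
  intro Hsg. unfold penalty, cone.
  destruct (S_abs_bounds sg Hsg (t - t0)). destruct (S_abs_bounds sg Hsg (x - x0)).
  replace (p * (t - t0) + q * (x - x0) + c * (S sg (t - t0) + S sg (x - x0))
    - (0 + p * (t - t0) + q * (x - x0) + c * (Rabs (t - t0) + Rabs (x - x0))))
    with (c * ((S sg (t - t0) - Rabs (t - t0)) + (S sg (x - x0) - Rabs (x - x0)))) by ring.
  rewrite Rabs_mult, (Rabs_pos_eq (_ + _)) by lra.
  pose proof (Rabs_pos c). nra.
Qed.

Lemma penalty_continuous a1 b1 a2 b2 p q c sg t0 x0 : 0 < sg ->
  cont_box a1 b1 a2 b2 (penalty p q c sg t0 x0).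
Proof.
  intro Hsg. unfold penalty.
  apply (cont_box_ext _ _ _ _ (fun t x => (p * (t - t0) + c * S sg (t - t0)) + (q * (x - x0) + c * S sg (x - x0))));
    [intros; ring|].
  assert (Hcont : forall z0 k z, continuity_pt (fun z => k * (z - z0) + c * S sg (z - z0)) z).
  { intros z0 k z. eapply derivable_lim_continuous.
    apply derivable_pt_lim_plus; apply derivable_pt_lim_scal.
    - apply derivable_pt_lim_minus; [apply derivable_pt_lim_id | apply derivable_pt_lim_const].
    - apply (derivable_pt_lim_comp (fun z => z - z0) (S sg)); [|apply derivable_pt_lim_S; auto].
      apply derivable_pt_lim_minus; [apply derivable_pt_lim_id | apply derivable_pt_lim_const]. }
  apply cont_box_add; [apply (cont_box_t _ _ _ _ (fun t => p * (t - t0) + c * S sg (t - t0)))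
    | apply (cont_box_x _ _ _ _ (fun x => q * (x - x0) + c * S sg (x - x0)))]; apply Hcont.
Qed.

Lemma penalty_dt p q c sg t0 x0 xs ts : 0 < sg ->
  derivable_pt_lim (fun t => penalty p q c sg t0 x0 t xs) ts (p + c * ((ts - t0) / S sg (ts - t0))).
Proof.
  intro Hsg. unfold penalty.
  eapply derivable_pt_lim_val; [|apply derivable_pt_lim_plus;
    [apply derivable_pt_lim_plus; [apply derivable_pt_lim_scal, derivable_pt_lim_minus;
      [apply derivable_pt_lim_id | apply derivable_pt_lim_const] | apply derivable_pt_lim_const]
    | apply derivable_pt_lim_scal, derivable_pt_lim_plus;
      [apply (derivable_pt_lim_comp (fun t => t - t0) (S sg));
        [apply derivable_pt_lim_minus; [apply derivable_pt_lim_id | apply derivable_pt_lim_const]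
        | apply derivable_pt_lim_S; auto]
      | apply derivable_pt_lim_const]]].
  ring.
Qed.

Lemma penalty_dx p q c sg t0 x0 ts y : 0 < sg ->
  derivable_pt_lim (fun x => penalty p q c sg t0 x0 ts x) y (q + c * ((y - x0) / S sg (y - x0))).
Proof.
  intro Hsg. unfold penalty.
  eapply derivable_pt_lim_val; [|apply derivable_pt_lim_plus;
    [apply derivable_pt_lim_plus; [apply derivable_pt_lim_const | apply derivable_pt_lim_scal, derivable_pt_lim_minus;
      [apply derivable_pt_lim_id | apply derivable_pt_lim_const]]
    | apply derivable_pt_lim_scal, derivable_pt_lim_plus;
      [apply derivable_pt_lim_const | apply (derivable_pt_lim_comp (fun t => t - x0) (S sg));
        [apply derivable_pt_lim_minus; [apply derivable_pt_lim_id | apply derivable_pt_lim_const]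
        | apply derivable_pt_lim_S; auto]]]].
  ring.
Qed.

Lemma penalty_dxx q c sg x0 xs : 0 < sg ->
  derivable_pt_lim (fun y => q + c * ((y - x0) / S sg (y - x0))) xs
    (c * (sg * sg / (S sg (xs - x0) * S sg (xs - x0) * S sg (xs - x0)))).
Proof.
  intro Hsg.
  eapply derivable_pt_lim_val; [|apply derivable_pt_lim_plus; [apply derivable_pt_lim_const|
    apply derivable_pt_lim_scal, (derivable_pt_lim_comp (fun y => y - x0) (fun s => s / S sg s));
    [apply derivable_pt_lim_minus; [apply derivable_pt_lim_id | apply derivable_pt_lim_const]
    | apply derivable_pt_lim_dS; auto]]].
  ring.
Qed.

Lemma hamiltonian_perturbation p q c th1 th2 : Rabs th1 <= 1 -> Rabs th2 <= 1 ->
  Rabs ((p + c * th1) + (q + c * th2) * (q + c * th2) - (p + q * q)) <= Rabs c * (1 + 2 * Rabs q + Rabs c).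
Proof.
  intros H1 H2.
  replace ((p + c * th1) + (q + c * th2) * (q + c * th2) - (p + q * q))
    with (c * th1 + 2 * q * (c * th2) + (c * th2) * (c * th2)) by ring.
  eapply Rle_trans; [apply Rabs_triang|]. rewrite !Rabs_mult.
  eapply Rle_trans; [apply Rplus_le_compat_r, Rabs_triang|]. rewrite !Rabs_mult.
  rewrite (Rabs_pos_eq 2) by lra.
  pose proof (Rabs_pos c). pose proof (Rabs_pos q). pose proof (Rabs_pos th1). pose proof (Rabs_pos th2).
  assert (Rabs c * Rabs th1 <= Rabs c) by nra.
  assert (Hc2 : Rabs c * Rabs th2 <= Rabs c) by nra.
  assert (0 <= Rabs c * Rabs th2) by nra.
  assert (2 * Rabs q * (Rabs c * Rabs th2) <= 2 * Rabs q * Rabs c) by (apply Rmult_le_compat_l; nra).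
  assert (Rabs c * Rabs th2 * (Rabs c * Rabs th2) <= Rabs c * Rabs c) by (apply Rmult_le_compat; nra).
  nra.
Qed.

Lemma derivable_pt_lim_div_const e x : 0 < e -> derivable_pt_lim (fun y => y / e) x (/ e).
Proof.
  intro He. apply (derivable_pt_lim_val _ _ (/e * 1)); [ring|].
  apply (derivable_pt_lim_ext (fun y => / e * y)); [intro; unfold Rdiv; ring|].
  apply derivable_pt_lim_scal, derivable_pt_lim_id.
Qed.

Section LogTransform.

(** The Hopf-Cole-type transform W(t,x) = -e log u(t/e, x/e) of a positive
    classical solution of u_t - u_xx = u (1 - u - a v) satisfies
    W_t - e W_xx + W_x^2 + 1 - u - a v = 0. *)
Variables (a e : R) (u v ut ux uxx : R -> R -> R).
Hypothesis He : 0 < e.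
Hypothesis Hder : forall t x, 0 < t -> derivable_pt_lim (fun s => u s x) t (ut t x) /\
  derivable_pt_lim (fun y => u t y) x (ux t x) /\ derivable_pt_lim (fun y => ux t y) x (uxx t x).
Hypothesis Heq : forall t x, 0 < t -> ut t x - uxx t x = u t x * (1 - u t x - a * v t x).

Lemma log_transform_dt ts xs : 0 < ts -> 0 < u (ts / e) (xs / e) ->
  derivable_pt_lim (fun t => - e * ln (u (t / e) (xs / e))) ts
    (- (ut (ts / e) (xs / e) / u (ts / e) (xs / e))).
Proof.
  intros Hts HU. assert (Htse : 0 < ts / e) by (apply Rdiv_lt_0_compat; lra).
  apply (derivable_pt_lim_val _ _ (- e * (/ u (ts / e) (xs / e) * (ut (ts / e) (xs / e) * / e))));
    [field; lra|].
  apply derivable_pt_lim_scal.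
  apply (derivable_pt_lim_comp (fun t => u (t / e) (xs / e)) ln); [|apply derivable_pt_lim_ln; exact HU].
  apply (derivable_pt_lim_comp (fun t => t / e) (fun t => u t (xs / e)));
    [apply derivable_pt_lim_div_const; auto | apply (Hder _ _ Htse)].
Qed.

Lemma log_transform_dx ts y : 0 < ts -> 0 < u (ts / e) (y / e) ->
  derivable_pt_lim (fun x => - e * ln (u (ts / e) (x / e))) y
    (- (ux (ts / e) (y / e) / u (ts / e) (y / e))).
Proof.
  intros Hts HU. assert (Htse : 0 < ts / e) by (apply Rdiv_lt_0_compat; lra).
  apply (derivable_pt_lim_val _ _ (- e * (/ u (ts / e) (y / e) * (ux (ts / e) (y / e) * / e))));
    [field; lra|].
  apply derivable_pt_lim_scal.
  apply (derivable_pt_lim_comp (fun x => u (ts / e) (x / e)) ln); [|apply derivable_pt_lim_ln; exact HU].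
  apply (derivable_pt_lim_comp (fun x => x / e) (fun x => u (ts / e) x));
    [apply derivable_pt_lim_div_const; auto | apply (Hder _ _ Htse)].
Qed.

Lemma log_transform_dxx ts xs : 0 < ts -> 0 < u (ts / e) (xs / e) ->
  derivable_pt_lim (fun y => - (ux (ts / e) (y / e) / u (ts / e) (y / e))) xs
    (- ((uxx (ts / e) (xs / e) * u (ts / e) (xs / e) - ux (ts / e) (xs / e) * ux (ts / e) (xs / e))
        / (e * (u (ts / e) (xs / e) * u (ts / e) (xs / e))))).
Proof.
  intros Hts HU. assert (Htse : 0 < ts / e) by (apply Rdiv_lt_0_compat; lra).
  destruct (Hder _ (xs / e) Htse) as [_ [D2 D3]].
  eapply derivable_pt_lim_val; [|apply derivable_pt_lim_opp,
    (derivable_pt_lim_div (fun y => ux (ts / e) (y / e)) (fun y => u (ts / e) (y / e)));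
    [apply (derivable_pt_lim_comp (fun x => x / e) (fun x => ux (ts / e) x));
      [apply derivable_pt_lim_div_const; auto | exact D3]
    | apply (derivable_pt_lim_comp (fun x => x / e) (fun x => u (ts / e) x));
      [apply derivable_pt_lim_div_const; auto | exact D2]
    | lra]].
  unfold Rsqr. field. lra.
Qed.

Lemma log_transform_equation ts xs : 0 < ts -> 0 < u (ts / e) (xs / e) ->
  let U := u (ts / e) (xs / e) in
  - (ut (ts / e) (xs / e) / U) + (ux (ts / e) (xs / e) / U) * (ux (ts / e) (xs / e) / U)
  + 1 - U - a * v (ts / e) (xs / e)
  - e * - ((uxx (ts / e) (xs / e) * U - ux (ts / e) (xs / e) * ux (ts / e) (xs / e)) / (e * (U * U))) = 0.
Proof.
  intros Hts HU U. assert (Htse : 0 < ts / e) by (apply Rdiv_lt_0_compat; lra).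
  assert (Hpde := Heq _ (xs / e) Htse). fold U in Hpde. fold U in HU. fold U.
  replace (ut (ts / e) (xs / e)) with (uxx (ts / e) (xs / e) + U * (1 - U - a * v (ts / e) (xs / e))) by lra.
  field. split; lra.
Qed.

(** At a local extremum (maximum of s (W - g), with s = +-1) of the difference
    between W and a smooth g, the equation for W turns into a one-sided
    inequality for g: s (g_t + g_x^2 + 1 - u - a v - e g_xx) <= 0. *)
Lemma penalized_extremum_inequality (s : R) (g : R -> R -> R) gt (gx : R -> R) gxx ts xs rho :
  s * s = 1 -> 0 < rho ->
  (forall t x, Rabs (t - ts) < rho -> Rabs (x - xs) < rho -> 0 < t /\ 0 < u (t / e) (x / e)) ->
  (forall t x, Rabs (t - ts) < rho -> Rabs (x - xs) < rho ->
     s * (- e * ln (u (t / e) (x / e)) - g t x) <= s * (- e * ln (u (ts / e) (xs / e)) - g ts xs)) ->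
  derivable_pt_lim (fun t => g t xs) ts gt ->
  (forall y, Rabs (y - xs) < rho -> derivable_pt_lim (fun y => g ts y) y (gx y)) ->
  derivable_pt_lim gx xs gxx ->
  s * (gt + gx xs * gx xs + 1 - u (ts / e) (xs / e) - a * v (ts / e) (xs / e) - e * gxx) <= 0.
Proof.
  intros Hs Hr Hpos Hmax Hgt Hgx Hgxx.
  assert (Hc : Rabs (ts - ts) < rho /\ Rabs (xs - xs) < rho) by (rewrite !Rminus_diag, Rabs_R0; lra).
  destruct (Hpos ts xs (proj1 Hc) (proj2 Hc)) as [Hts HU].
  set (U := u (ts / e) (xs / e)) in *.
  set (Wt := - (ut (ts / e) (xs / e) / U)).
  set (Wx := fun y => - (ux (ts / e) (y / e) / u (ts / e) (y / e))).
  set (Wxx := - ((uxx (ts / e) (xs / e) * U - ux (ts / e) (xs / e) * ux (ts / e) (xs / e)) / (e * (U * U)))).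
  assert (E1 : s * (Wt - gt) = 0).
  { apply (deriv_zero_at_max (fun t => s * (- e * ln (u (t / e) (xs / e)) - g t xs)) ts _ rho Hr).
    - intros t Ht. apply Hmax; tauto.
    - apply derivable_pt_lim_scal, derivable_pt_lim_minus; [apply log_transform_dt; auto | exact Hgt]. }
  assert (HdF : forall y, Rabs (y - xs) < rho ->
      derivable_pt_lim (fun x => s * (- e * ln (u (ts / e) (x / e)) - g ts x)) y (s * (Wx y - gx y))).
  { intros y Hy. apply derivable_pt_lim_scal, derivable_pt_lim_minus; [|apply Hgx; auto].
    apply log_transform_dx; [auto | apply (Hpos ts y (proj1 Hc) Hy)]. }
  assert (E2 : s * (Wx xs - gx xs) = 0).
  { apply (deriv_zero_at_max _ xs _ rho Hr (fun y Hy => Hmax ts y (proj1 Hc) Hy)). apply HdF, Hc. }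
  assert (E3 : s * (Wxx - gxx) <= 0).
  { apply (second_deriv_nonpos_at_max _ (fun y => s * (Wx y - gx y)) xs _ rho Hr
      (fun y Hy => Hmax ts y (proj1 Hc) Hy) HdF).
    apply derivable_pt_lim_scal, derivable_pt_lim_minus; [apply log_transform_dxx; auto | exact Hgxx]. }
  assert (Hs0 : s <> 0) by (intro H0; rewrite H0 in Hs; lra).
  assert (Hgt' : gt = Wt) by (apply Rmult_integral in E1; destruct E1; [contradiction | lra]).
  assert (Hgx' : gx xs = Wx xs) by (apply Rmult_integral in E2; destruct E2; [contradiction | lra]).
  assert (Hlog := log_transform_equation ts xs Hts HU). cbv zeta in Hlog. fold U Wt Wxx in Hlog.
  replace (Wx xs) with (- (ux (ts / e) (xs / e) / U)) in Hgx' by reflexivity.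
  assert (Hkey : gt + gx xs * gx xs + 1 - U - a * v (ts / e) (xs / e) = e * Wxx)
    by (rewrite Hgt', Hgx'; lra).
  replace (s * (gt + gx xs * gx xs + 1 - U - a * v (ts / e) (xs / e) - e * gxx))
    with (e * (s * (Wxx - gxx))) by (rewrite Hkey; ring).
  assert (0 <= e * - (s * (Wxx - gxx))) by (apply Rmult_le_pos; lra). lra.
Qed.

End LogTransform.

Lemma weps_lt_finite u e t x M : Rbar_lt (weps u e t x) (Finite M) ->
  0 < resc u e t x /\ - e * ln (resc u e t x) < M.
Proof. unfold weps. destruct Rlt_dec as [Hp|Hp]; simpl; tauto. Qed.

Lemma weps_gt_finite u e t x M : Rbar_lt (Finite M) (weps u e t x) ->
  0 < resc u e t x -> M < - e * ln (resc u e t x).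
Proof. unfold weps. destruct Rlt_dec as [Hp|Hp]; simpl; tauto. Qed.

Lemma neg_log_penalized e U g : 0 < e -> 0 < U -> - e * ln (U * exp (g / e)) = - e * ln U - g.
Proof. intros He HU. rewrite ln_mult, ln_exp by (auto; apply exp_pos). field. lra. Qed.

Lemma oriented_neg_log_le s e A B : s = 1 \/ s = -1 -> 0 < e -> 0 < A -> 0 < B ->
  (s * (- e * ln A) <= s * (- e * ln B) <-> - s * A <= - s * B).
Proof.
  intros Hs He HA HB.
  assert (Hmono : forall X Y, 0 < X -> 0 < Y -> (ln X <= ln Y <-> X <= Y)).
  { intros X Y HX HY. split; intro H.
    - destruct (Rle_or_lt X Y) as [|Hlt]; auto. apply ln_increasing in Hlt; lra.
    - destruct H as [H|H]; [left; apply ln_increasing; auto | subst; lra]. }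
  destruct Hs as [-> | ->]; split; intro H.
  - assert (Hl : ln B <= ln A) by nra. apply (proj1 (Hmono B A HB HA)) in Hl. lra.
  - assert (Hl : B <= A) by lra. apply (proj2 (Hmono B A HB HA)) in Hl. nra.
  - assert (Hl : ln A <= ln B) by nra. apply (proj1 (Hmono A B HA HB)) in Hl. lra.
  - assert (Hl : A <= B) by lra. apply (proj2 (Hmono A B HA HB)) in Hl. nra.
Qed.

Lemma log_weight_continuous e (u g : R -> R -> R) a1 b1 a2 b2 :
  cont_box a1 b1 a2 b2 (fun t x => u (t / e) (x / e)) -> cont_box a1 b1 a2 b2 g ->
  cont_box a1 b1 a2 b2 (fun t x => u (t / e) (x / e) * exp (g t x / e)).
Proof.
  intros Hcu Hcg. apply cont_box_mul; [exact Hcu|].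
  apply (cont_box_comp _ _ _ _ exp (fun t x => g t x / e)); [apply exp_continuous|].
  apply (cont_box_ext _ _ _ _ (fun t x => g t x * (fun _ _ => / e) t x)); [intros; unfold Rdiv; ring|].
  apply cont_box_mul; [exact Hcg | apply cont_box_const].
Qed.

(** The extremal problem is posed for the continuous function -s u^e e^{g/e};
    for s = -1 the points where u^e vanishes cannot be maximal. *)
Lemma log_penalized_extremum (s e : R) (u g : R -> R -> R) t0 x0 rr t1 x1 :
  s = 1 \/ s = -1 -> 0 < e -> 0 < rr ->
  cont_box (t0 - rr) (t0 + rr) (x0 - rr) (x0 + rr) (fun t x => u (t / e) (x / e)) ->
  cont_box (t0 - rr) (t0 + rr) (x0 - rr) (x0 + rr) g ->
  (s = 1 -> forall t x, square t0 x0 rr t x -> 0 < u (t / e) (x / e)) ->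
  square t0 x0 rr t1 x1 -> 0 < u (t1 / e) (x1 / e) ->
  (forall t x, square t0 x0 rr t x -> (rr / 2 <= Rabs (t - t0) \/ rr / 2 <= Rabs (x - x0)) ->
     0 < u (t / e) (x / e) ->
     s * (- e * ln (u (t / e) (x / e)) - g t x) < s * (- e * ln (u (t1 / e) (x1 / e)) - g t1 x1)) ->
  exists ts xs rho, Rabs (ts - t0) < rr / 2 /\ Rabs (xs - x0) < rr / 2 /\ 0 < rho /\
    (forall t x, square t0 x0 rr t x -> 0 < u (t / e) (x / e) ->
      s * (- e * ln (u (t / e) (x / e)) - g t x) <= s * (- e * ln (u (ts / e) (xs / e)) - g ts xs)) /\
    (forall t x, Rabs (t - ts) < rho -> Rabs (x - xs) < rho ->
      square t0 x0 rr t x /\ 0 < u (t / e) (x / e)).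
Proof.
  intros Hs He Hrr Hcu Hcg Hpos1 H1 Hu1 Hann.
  set (Psi := fun t x => u (t / e) (x / e) * exp (g t x / e)).
  assert (HPsi : forall t x, 0 < u (t / e) (x / e) ->
      0 < Psi t x /\ - e * ln (u (t / e) (x / e)) - g t x = - e * ln (Psi t x)).
  { intros t x Hu. unfold Psi. split; [apply Rmult_lt_0_compat; [auto | apply exp_pos]|].
    rewrite neg_log_penalized; auto. }
  assert (Hcont : cont_box (t0 - rr) (t0 + rr) (x0 - rr) (x0 + rr) (fun t x => - s * Psi t x)).
  { apply (cont_box_mul _ _ _ _ (fun _ _ => - s)); [apply cont_box_const | apply log_weight_continuous; auto]. }
  destruct (HPsi t1 x1 Hu1) as [HP1 HF1].
  destruct (interior_argmax (fun t x => - s * Psi t x) t0 x0 rr t1 x1 Hrr Hcont H1) as [ts [xs [Hts [Hxs Hmax]]]].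
  { intros t x Ht Hor. destruct (Rlt_or_le 0 (u (t / e) (x / e))) as [Hu|Hu].
    - destruct (HPsi t x Hu) as [HP HF]. specialize (Hann t x Ht Hor Hu). rewrite HF, HF1 in Hann.
      destruct (Rlt_or_le (- s * Psi t x) (- s * Psi t1 x1)) as [|Hle]; auto.
      apply (oriented_neg_log_le s e (Psi t1 x1) (Psi t x) Hs He HP1 HP) in Hle. lra.
    - destruct Hs as [-> | ->]; [specialize (Hpos1 eq_refl t x Ht); lra|].
      pose proof (exp_pos (g t x / e)). unfold Psi in *. nra. }
  assert (Hsq : square t0 x0 rr ts xs) by (apply square_abs; split; lra).
  assert (Hus : 0 < u (ts / e) (xs / e)).
  { destruct Hs as [-> | ->]; [apply Hpos1; auto|].
    specialize (Hmax t1 x1 H1). pose proof (exp_pos (g ts xs / e)).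
    unfold Psi in *. destruct (Rlt_or_le 0 (u (ts / e) (xs / e))) as [|Hn]; auto. nra. }
  destruct (HPsi ts xs Hus) as [HPs HFs].
  destruct (Hcu ts xs Hsq (u (ts / e) (xs / e) / 2) ltac:(lra)) as [dc [Hdc Hnear]].
  destruct (inner_neighbourhood t0 x0 rr ts xs Hts Hxs) as [rho [Hrho Hin]].
  exists ts, xs, (Rmin rho dc). split; [auto|]. split; [auto|]. split; [apply Rmin_glb_lt; auto|]. split.
  - intros t x Hsqt Hut. destruct (HPsi t x Hut) as [HP HF]. rewrite HF, HFs.
    apply (oriented_neg_log_le s e); auto.
  - intros t x Ht Hx. pose proof (Rmin_l rho dc). pose proof (Rmin_r rho dc).
    assert (Hsqt : square t0 x0 rr t x) by (apply Hin; lra).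
    split; [auto|]. specialize (Hnear t x Hsqt ltac:(lra) ltac:(lra)).
    apply Rabs_def2 in Hnear. destruct Hnear. lra.
Qed.

Lemma eta_choice P q a : 0 < P -> 0 <= a ->
  exists eta, 0 < eta <= 1 /\ (12 + 6 * Rabs q + a) * eta <= P / 4.
Proof.
  intros HP Ha. set (K := 12 + 6 * Rabs q + a). assert (HK : 0 < K) by (unfold K; pose proof (Rabs_pos q); lra).
  exists (Rmin 1 (P / (4 * K))). pose proof (Rmin_l 1 (P / (4 * K))). pose proof (Rmin_r 1 (P / (4 * K))).
  split; [split; [apply Rmin_glb_lt; [lra | apply Rdiv_lt_0_compat; lra] | auto]|].
  apply Rle_trans with (K * (P / (4 * K))); [apply Rmult_le_compat_l; lra | right; field; lra].
Qed.

Lemma cone_at_vertex_bound p q c t0 x0 t x :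
  Rabs (cone 0 p q c t0 x0 t x) <= (Rabs p + Rabs q + Rabs c) * (Rabs (t - t0) + Rabs (x - x0)).
Proof.
  assert (Hv : cone 0 p q c t0 x0 t0 x0 = 0) by (unfold cone; rewrite !Rminus_diag, Rabs_R0; ring).
  pose proof (cone_lipschitz 0 p q c t0 x0 t x t0 x0). pose proof (cone_lipschitz 0 p q c t0 x0 t0 x0 t x).
  rewrite (Rabs_minus_sym t0 t), (Rabs_minus_sym x0 x) in H0. apply Rabs_le. lra.
Qed.

Lemma small_of_neg_log e U m W : 0 < e -> 0 < U -> 0 < m ->
  e <= W / (2 * (Rabs (ln m) + 1)) -> W / 2 < - e * ln U -> U < m.
Proof.
  intros He HU Hm Hle Hlog. pose proof (Rabs_pos (ln m)).
  assert (Hln : ln U < - (Rabs (ln m) + 1)).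
  { apply (Rmult_lt_reg_l e); auto.
    assert (e * (Rabs (ln m) + 1) <= W / 2).
    { apply Rle_trans with (W / (2 * (Rabs (ln m) + 1)) * (Rabs (ln m) + 1)); [apply Rmult_le_compat_r; lra|].
      right. field. lra. }
    lra. }
  pose proof (Rle_abs (- ln m)) as Hm'. rewrite Rabs_Ropp in Hm'.
  rewrite <- (exp_ln U HU), <- (exp_ln m Hm). apply exp_increasing. lra.
Qed.

Lemma touch_cone_above (w : R -> R -> Rbar) phi t0 x0 W rho eta r1 p q rr :
  rr < rho -> rr < r1 -> rr < t0 -> w t0 x0 = Finite W ->
  (forall t x, 0 < t -> Rabs (t - t0) < rho -> Rabs (x - x0) < rho ->
     Rbar_le (w t x) (Rbar_addr (w t0 x0) (phi t x - phi t0 x0))) ->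
  (forall t x, Rabs (t - t0) < r1 -> Rabs (x - x0) < r1 ->
     Rabs (phi t x - phi t0 x0 - p * (t - t0) - q * (x - x0)) <= eta * (Rabs (t - t0) + Rabs (x - x0))) ->
  forall t x, square t0 x0 rr t x -> Rbar_le (w t x) (Finite (cone W p q eta t0 x0 t x)).
Proof.
  intros H1 H2 H3 HW Htouch Hlin t x Hsq. apply square_abs in Hsq. destruct Hsq as [Ht Hx].
  pose proof (Rabs_le_bounds _ _ Ht).
  eapply Rbar_le_trans; [apply Htouch; lra|]. rewrite HW. simpl.
  specialize (Hlin t x ltac:(lra) ltac:(lra)). apply Rabs_le_bounds in Hlin. unfold cone. lra.
Qed.

Lemma touch_cone_below (w : R -> R -> Rbar) phi t0 x0 W rho eta r1 p q rr :
  rr < rho -> rr < r1 -> rr < t0 -> w t0 x0 = Finite W ->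
  (forall t x, 0 < t -> Rabs (t - t0) < rho -> Rabs (x - x0) < rho ->
     Rbar_le (Rbar_addr (w t0 x0) (phi t x - phi t0 x0)) (w t x)) ->
  (forall t x, Rabs (t - t0) < r1 -> Rabs (x - x0) < r1 ->
     Rabs (phi t x - phi t0 x0 - p * (t - t0) - q * (x - x0)) <= eta * (Rabs (t - t0) + Rabs (x - x0))) ->
  forall t x, square t0 x0 rr t x -> Rbar_le (Finite (cone W p q (- eta) t0 x0 t x)) (w t x).
Proof.
  intros H1 H2 H3 HW Htouch Hlin t x Hsq. apply square_abs in Hsq. destruct Hsq as [Ht Hx].
  pose proof (Rabs_le_bounds _ _ Ht).
  eapply Rbar_le_trans; [|apply Htouch; lra]. rewrite HW. simpl.
  specialize (Hlin t x ltac:(lra) ltac:(lra)). apply Rabs_le_bounds in Hlin. unfold cone. lra.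
Qed.

Lemma penalty_hamiltonian_bound p q c sg t0 x0 ts xs : 0 < sg ->
  Rabs ((p + c * ((ts - t0) / S sg (ts - t0)))
        + (q + c * ((xs - x0) / S sg (xs - x0))) * (q + c * ((xs - x0) / S sg (xs - x0))) - (p + q * q))
    <= Rabs c * (1 + 2 * Rabs q + Rabs c).
Proof. intro Hsg. apply hamiltonian_perturbation; apply dS_bound; auto. Qed.

Lemma penalty_curvature_small e c sg xs x0 m : 0 < sg -> 0 < e -> 0 < m ->
  e < m * sg / (Rabs c + 1) ->
  Rabs (e * (c * (sg * sg / (S sg (xs - x0) * S sg (xs - x0) * S sg (xs - x0))))) < m.
Proof.
  intros Hsg He Hm Hle. destruct (ddS_bound sg Hsg (xs - x0)) as [D0 D1].
  set (D2 := sg * sg / _) in *. pose proof (Rabs_pos c).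
  rewrite !Rabs_mult, (Rabs_pos_eq e), (Rabs_pos_eq D2) by lra.
  assert (Rabs c * D2 <= (Rabs c + 1) / sg).
  { apply Rle_trans with (Rabs c * (1 / sg)); [apply Rmult_le_compat_l; lra|].
    unfold Rdiv. rewrite Rmult_1_l. apply Rmult_le_compat_r; [left; apply Rinv_0_lt_compat|]; lra. }
  apply Rle_lt_trans with (e * ((Rabs c + 1) / sg)); [apply Rmult_le_compat_l; lra|].
  apply (Rmult_lt_reg_r (sg / (Rabs c + 1))); [apply Rdiv_lt_0_compat; lra|].
  replace (e * ((Rabs c + 1) / sg) * (sg / (Rabs c + 1))) with e by (field; lra).
  replace (m * (sg / (Rabs c + 1))) with (m * sg / (Rabs c + 1)) by (field; lra). exact Hle.
Qed.

Lemma cone_minus_penalty s W p q eta sg t0 x0 t x : s = 1 \/ s = -1 -> 0 < eta -> 0 < sg ->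
  s * cone W p q (s * eta) t0 x0 t x - s * penalty p q (s * (3 * eta)) sg t0 x0 t x
    <= s * W - 2 * eta * (Rabs (t - t0) + Rabs (x - x0)) + 6 * eta * sg.
Proof.
  intros Hs Heta Hsg.
  assert (Hg := penalty_near_cone p q (s * (3 * eta)) sg t0 x0 t x Hsg).
  rewrite (sign_abs_mul s (3 * eta) Hs), (Rabs_pos_eq (3 * eta)) in Hg by lra.
  replace (s * cone W p q (s * eta) t0 x0 t x - s * penalty p q (s * (3 * eta)) sg t0 x0 t x)
    with (s * W - 2 * (s * s) * eta * (Rabs (t - t0) + Rabs (x - x0))
          - s * (penalty p q (s * (3 * eta)) sg t0 x0 t x - cone 0 p q (s * (3 * eta)) t0 x0 t x))
    by (unfold cone; ring).
  rewrite sign_sq by auto.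
  assert (Rabs (s * (penalty p q (s * (3 * eta)) sg t0 x0 t x - cone 0 p q (s * (3 * eta)) t0 x0 t x))
    <= 6 * eta * sg) by (rewrite sign_abs_mul by auto; lra).
  apply Rabs_le_bounds in H. lra.
Qed.

Lemma oriented_penalty_bounds s p q eta rr t0 x0 t x : s = 1 \/ s = -1 -> 0 < eta -> 0 < rr ->
  Rabs (s * penalty p q (s * (3 * eta)) (rr / 48) t0 x0 t x - s * cone 0 p q (s * (3 * eta)) t0 x0 t x)
    <= eta * rr / 8 /\
  Rabs (s * cone 0 p q (s * (3 * eta)) t0 x0 t x) <= (Rabs p + Rabs q + 3 * eta) * (Rabs (t - t0) + Rabs (x - x0)).
Proof.
  intros Hs Heta Hrr. split.
  - rewrite <- Rmult_minus_distr_l, sign_abs_mul by auto.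
    eapply Rle_trans; [apply penalty_near_cone; lra|].
    rewrite sign_abs_mul, Rabs_pos_eq by (auto || lra). lra.
  - rewrite sign_abs_mul by auto. eapply Rle_trans; [apply cone_at_vertex_bound|].
    rewrite sign_abs_mul, (Rabs_pos_eq (3 * eta)) by (auto || lra). apply Rle_refl.
Qed.

Section ApproximateTestInequality.

(** The common core of the sub- and supersolution arguments, oriented by
    s = +1 (w^* touched from above) or s = -1 (w_* touched from below).  Then, maximizing s (w^e - g) for
    the penalty g of slope 3 s eta produces an interior point where the
    log-transformed equation yields the Hamiltonian inequality for (p,q) up to
    an error controlled by eta and e. *)
Variables (a e : R) (u v ut ux uxx : R -> R -> R) (s p q eta W t0 x0 rr m t1 x1 : R).
Hypothesis Hsign : s = 1 \/ s = -1.
Hypothesis He : 0 < e.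
Hypothesis Hcu : cont2_on closed_half u.
Hypothesis Hder : forall t x, 0 < t -> derivable_pt_lim (fun s => u s x) t (ut t x) /\
  derivable_pt_lim (fun y => u t y) x (ux t x) /\ derivable_pt_lim (fun y => ux t y) x (uxx t x).
Hypothesis Heq : forall t x, 0 < t -> ut t x - uxx t x = u t x * (1 - u t x - a * v t x).
Hypothesis Heta : 0 < eta.
Hypothesis Hrr : 0 < rr.
Hypothesis Hrrt : rr < t0.
Hypothesis Hm : 0 < m.
Hypothesis Hem : e < m * (rr / 48) / (Rabs (s * (3 * eta)) + 1).
Hypothesis Hbox : forall t x, square t0 x0 rr t x ->
  (s = 1 -> 0 < u (t / e) (x / e)) /\
  (0 < u (t / e) (x / e) ->
     s * (- e * ln (u (t / e) (x / e))) < s * cone W p q (s * eta) t0 x0 t x + eta * rr / 8).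
Hypothesis Hsq1 : square t0 x0 rr t1 x1.
Hypothesis Hclose1 : (Rabs p + Rabs q + 3 * eta) * (Rabs (t1 - t0) + Rabs (x1 - x0)) <= eta * rr / 8.
Hypothesis Hu1 : 0 < u (t1 / e) (x1 / e).
Hypothesis Hw1 : s * W - eta * rr / 8 < s * (- e * ln (u (t1 / e) (x1 / e))).

Lemma penalized_interior_point : exists ts xs rho,
  Rabs (ts - t0) < rr / 2 /\ Rabs (xs - x0) < rr / 2 /\ 0 < rho /\
  s * W - eta * rr / 2 - (Rabs p + Rabs q + 3 * eta) * rr < s * (- e * ln (u (ts / e) (xs / e))) /\
  (forall t x, Rabs (t - ts) < rho -> Rabs (x - xs) < rho -> 0 < t /\ 0 < u (t / e) (x / e)) /\
  (forall t x, Rabs (t - ts) < rho -> Rabs (x - xs) < rho ->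
     s * (- e * ln (u (t / e) (x / e)) - penalty p q (s * (3 * eta)) (rr / 48) t0 x0 t x)
       <= s * (- e * ln (u (ts / e) (xs / e)) - penalty p q (s * (3 * eta)) (rr / 48) t0 x0 ts xs)).
Proof.
  set (kap := eta * rr / 8). set (sg := rr / 48). assert (Hsg : 0 < sg) by (unfold sg; lra).
  set (L := Rabs p + Rabs q + 3 * eta).
  set (g := penalty p q (s * (3 * eta)) sg t0 x0).
  set (F := fun t x => - e * ln (u (t / e) (x / e)) - g t x).
  assert (Hg : forall t x, Rabs (s * g t x - s * cone 0 p q (s * (3 * eta)) t0 x0 t x) <= kap)
    by (intros t x; exact (proj1 (oriented_penalty_bounds s p q eta rr t0 x0 t x Hsign Heta Hrr))).
  assert (Hcone0 : forall t x, Rabs (s * cone 0 p q (s * (3 * eta)) t0 x0 t x) <= L * (Rabs (t - t0) + Rabs (x - x0)))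
    by (intros t x; exact (proj2 (oriented_penalty_bounds s p q eta rr t0 x0 t x Hsign Heta Hrr))).
  assert (HF1 : s * W - 3 * kap < s * F t1 x1).
  { specialize (Hg t1 x1). specialize (Hcone0 t1 x1). apply Rabs_le_bounds in Hg. apply Rabs_le_bounds in Hcone0.
    unfold F. fold kap in Hw1, Hclose1. fold L in Hclose1. lra. }
  destruct (log_penalized_extremum s e u g t0 x0 rr t1 x1 Hsign He Hrr
    (cont_box_rescale (t0 - rr) (t0 + rr) (x0 - rr) (x0 + rr) u e He ltac:(lra) Hcu)
    (penalty_continuous (t0 - rr) (t0 + rr) (x0 - rr) (x0 + rr) p q (s * (3 * eta)) sg t0 x0 Hsg)
    (fun Hs1 t x Hsq => proj1 (Hbox t x Hsq) Hs1) Hsq1 Hu1)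
    as [ts [xs [rho [Hts [Hxs [Hrho [Hglob Hloc]]]]]]].
  { intros t x Hsq Hann Hu. fold (F t x) (F t1 x1).
    assert (Hw := proj2 (Hbox t x Hsq) Hu). fold kap in Hw.
    assert (Hgap := cone_minus_penalty s W p q eta sg t0 x0 t x Hsign Heta Hsg). fold g in Hgap.
    assert (rr / 2 <= Rabs (t - t0) + Rabs (x - x0))
      by (pose proof (Rabs_pos (t - t0)); pose proof (Rabs_pos (x - x0)); lra).
    assert (eta * rr <= 2 * eta * (Rabs (t - t0) + Rabs (x - x0))) by nra.
    unfold F, kap, sg in *. rewrite !Rmult_minus_distr_l in *.
    assert (0 < eta * rr) by nra. lra. }
  assert (Hsqs : square t0 x0 rr ts xs) by (apply square_abs; lra).
  assert (HUs : 0 < u (ts / e) (xs / e)).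
  { apply (Hloc ts xs); rewrite Rminus_diag, Rabs_R0; lra. }
  assert (HFs : s * F t1 x1 <= s * F ts xs) by (apply (Hglob t1 x1 Hsq1 Hu1)).
  exists ts, xs, rho. split; [auto|]. split; [auto|]. split; [auto|]. split; [|split].
  - specialize (Hg ts xs). specialize (Hcone0 ts xs). apply Rabs_le_bounds in Hg. apply Rabs_le_bounds in Hcone0.
    assert (L * (Rabs (ts - t0) + Rabs (xs - x0)) <= L * rr)
      by (apply Rmult_le_compat_l; [unfold L; pose proof (Rabs_pos p); pose proof (Rabs_pos q) |]; lra).
    unfold F in *. fold L. unfold kap in *. nra.
  - intros t x Ht Hx. destruct (Hloc t x Ht Hx) as [Hsq Hu]. split; [|exact Hu].
    apply square_abs in Hsq. destruct Hsq as [Hsq _]. apply Rabs_le_bounds in Hsq. lra.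
  - intros t x Ht Hx. destruct (Hloc t x Ht Hx) as [Hsq Hu]. apply (Hglob t x Hsq Hu).
Qed.

Lemma approximate_test_inequality : exists ts xs,
  Rabs (ts - t0) < rr / 2 /\ Rabs (xs - x0) < rr / 2 /\ 0 < u (ts / e) (xs / e) /\
  s * W - eta * rr / 2 - (Rabs p + Rabs q + 3 * eta) * rr < s * (- e * ln (u (ts / e) (xs / e))) /\
  s * (p + q * q + 1 - u (ts / e) (xs / e) - a * v (ts / e) (xs / e))
    <= 3 * eta * (1 + 2 * Rabs q + 3 * eta) + m.
Proof.
  destruct penalized_interior_point as [ts [xs [rho [Hts [Hxs [Hrho [Hlog [Hpos Hmax]]]]]]]].
  set (sg := rr / 48) in *. assert (Hsg : 0 < sg) by (unfold sg; lra).
  assert (Hineq := penalized_extremum_inequality a e u v ut ux uxx He Hder Heq s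
    (penalty p q (s * (3 * eta)) sg t0 x0)
    (p + s * (3 * eta) * ((ts - t0) / S sg (ts - t0))) (fun y => q + s * (3 * eta) * ((y - x0) / S sg (y - x0)))
    (s * (3 * eta) * (sg * sg / (S sg (xs - x0) * S sg (xs - x0) * S sg (xs - x0)))) ts xs rho
    (sign_sq s Hsign) Hrho Hpos Hmax
    (penalty_dt p q (s * (3 * eta)) sg t0 x0 xs ts Hsg) (fun y _ => penalty_dx p q (s * (3 * eta)) sg t0 x0 ts y Hsg)
    (penalty_dxx q (s * (3 * eta)) sg x0 xs Hsg)).
  cbv beta in Hineq.
  exists ts, xs. split; [auto|]. split; [auto|].
  split; [apply (Hpos ts xs); rewrite Rminus_diag, Rabs_R0; lra|]. split; [auto|].
  assert (Hcurv := penalty_curvature_small e (s * (3 * eta)) sg xs x0 m Hsg He Hm Hem).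
  assert (Hham := penalty_hamiltonian_bound p q (s * (3 * eta)) sg t0 x0 ts xs Hsg).
  rewrite sign_abs_mul, (Rabs_pos_eq (3 * eta)) in Hham by (auto || lra).
  set (th1 := (ts - t0) / S sg (ts - t0)) in *. set (th2 := (xs - x0) / S sg (xs - x0)) in *.
  set (D2 := sg * sg / (S sg (xs - x0) * S sg (xs - x0) * S sg (xs - x0))) in *.
  set (U := u (ts / e) (xs / e)) in *. set (V := v (ts / e) (xs / e)) in *.
  set (Hg := p + s * (3 * eta) * th1 + (q + s * (3 * eta) * th2) * (q + s * (3 * eta) * th2)) in *.
  assert (A1 : - (s * (Hg - (p + q * q))) <= 3 * eta * (1 + 2 * Rabs q + 3 * eta)).
  { eapply Rle_trans; [|exact Hham]. rewrite <- (sign_abs_mul s) by auto.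
    rewrite <- Rabs_Ropp. apply Rle_abs. }
  assert (A2 : s * (e * (s * (3 * eta) * D2)) < m).
  { eapply Rle_lt_trans; [|exact Hcurv]. rewrite <- (sign_abs_mul s (e * _)) by auto. apply Rle_abs. }
  replace (s * (p + q * q + 1 - U - a * V))
    with (s * (Hg + 1 - U - a * V - e * (s * (3 * eta) * D2)) - s * (Hg - (p + q * q))
          + s * (e * (s * (3 * eta) * D2))) by ring.
  lra.
Qed.

End ApproximateTestInequality.

Lemma upper_localization u (wstar : R -> R -> Rbar) W p q eta t0 x0 rr kap delta :
  0 < rr -> rr < t0 -> 0 < kap -> 0 < delta -> delta <= rr ->
  (forall t x, 0 <= t -> hr_limsup (weps u) t x (wstar t x)) -> wstar t0 x0 = Finite W ->
  (forall t x, square t0 x0 rr t x -> Rbar_le (wstar t x) (Finite (cone W p q eta t0 x0 t x))) ->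
  exists e t1 x1, 0 < e < delta /\ Rabs (t1 - t0) < delta /\ Rabs (x1 - x0) < delta /\
    (forall t x, square t0 x0 rr t x ->
       0 < resc u e t x /\ - e * ln (resc u e t x) < cone W p q eta t0 x0 t x + kap) /\
    W - kap < - e * ln (resc u e t1 x1).
Proof.
  intros Hrr Hrrt Hkap Hdelta Hdr Hws HW Hcone.
  destruct (uniform_eventual_bound (fun e t x c => Rbar_lt (weps u e t x) (Finite c))
    (cone W p q eta t0 x0) t0 x0 rr (Rabs p + Rabs q + Rabs eta) kap Hrr Hrrt
    ltac:(pose proof (Rabs_pos p); pose proof (Rabs_pos q); pose proof (Rabs_pos eta); lra) Hkap)
    as [dU [HdU HU]].
  { intros e t x c c' Hc Hlt. eapply Rbar_lt_le_trans; [exact Hlt | simpl; lra]. }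
  { intros t x Hsq. apply (limsup_ev _ _ _ (wstar t x)).
    - apply Hws. apply square_abs, proj1, Rabs_le_bounds in Hsq. lra.
    - eapply Rbar_le_lt_trans; [apply Hcone, Hsq | simpl; lra]. }
  { intros. apply cone_lipschitz. }
  pose proof (Rmin_l delta dU). pose proof (Rmin_r delta dU).
  destruct (proj2 (Hws t0 x0 ltac:(lra)) (W - kap) ltac:(rewrite HW; simpl; lra) (Rmin delta dU)
    ltac:(apply Rmin_glb_lt; auto)) as [e [t1 [x1 [He [Ht1 [Htt1 [Hxx1 Hw1]]]]]]].
  assert (Hbox : forall t x, square t0 x0 rr t x ->
      0 < resc u e t x /\ - e * ln (resc u e t x) < cone W p q eta t0 x0 t x + kap)
    by (intros t x Hsq; apply weps_lt_finite, HU; auto; lra).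
  assert (Hsq1 : square t0 x0 rr t1 x1) by (apply square_abs; lra).
  exists e, t1, x1. split; [lra|]. split; [lra|]. split; [lra|]. split; [exact Hbox|].
  exact (weps_gt_finite u e t1 x1 _ Hw1 (proj1 (Hbox t1 x1 Hsq1))).
Qed.

(** Localization for w_*, symmetrically (u^e may vanish on the square). *)
Lemma lower_localization u (wlow : R -> R -> Rbar) W p q eta t0 x0 rr kap delta :
  0 < rr -> rr < t0 -> 0 < kap -> 0 < delta -> delta <= rr ->
  (forall t x, 0 <= t -> hr_liminf (weps u) t x (wlow t x)) -> wlow t0 x0 = Finite W ->
  (forall t x, square t0 x0 rr t x -> Rbar_le (Finite (cone W p q (- eta) t0 x0 t x)) (wlow t x)) ->
  exists e t1 x1, 0 < e < delta /\ Rabs (t1 - t0) < delta /\ Rabs (x1 - x0) < delta /\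
    (forall t x, square t0 x0 rr t x -> 0 < resc u e t x ->
       cone W p q (- eta) t0 x0 t x - kap < - e * ln (resc u e t x)) /\
    0 < resc u e t1 x1 /\ - e * ln (resc u e t1 x1) < W + kap.
Proof.
  intros Hrr Hrrt Hkap Hdelta Hdr Hwl HW Hcone.
  destruct (uniform_eventual_bound (fun e t x c => Rbar_lt (Finite (- c)) (weps u e t x))
    (fun t x => - cone W p q (- eta) t0 x0 t x) t0 x0 rr (Rabs p + Rabs q + Rabs (- eta)) kap Hrr Hrrt
    ltac:(pose proof (Rabs_pos p); pose proof (Rabs_pos q); pose proof (Rabs_pos (- eta)); lra) Hkap)
    as [dU [HdU HU]].
  { intros e t x c c' Hc Hlt. eapply Rbar_le_lt_trans; [|exact Hlt]. simpl; lra. }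
  { intros t x Hsq. apply (liminf_ev _ _ _ (wlow t x)).
    - apply Hwl. apply square_abs, proj1, Rabs_le_bounds in Hsq. lra.
    - eapply Rbar_lt_le_trans; [|apply Hcone, Hsq]. simpl; lra. }
  { intros t x t' x'. pose proof (cone_lipschitz W p q (- eta) t0 x0 t' x' t x).
    rewrite (Rabs_minus_sym t'), (Rabs_minus_sym x') in H. lra. }
  pose proof (Rmin_l delta dU). pose proof (Rmin_r delta dU).
  destruct (proj2 (Hwl t0 x0 ltac:(lra)) (W + kap) ltac:(rewrite HW; simpl; lra) (Rmin delta dU)
    ltac:(apply Rmin_glb_lt; auto)) as [e [t1 [x1 [He [Ht1 [Htt1 [Hxx1 Hw1]]]]]]].
  exists e, t1, x1. split; [lra|]. split; [lra|]. split; [lra|]. split.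
  - intros t x Hsq Hu. assert (Hlt := HU e t x ltac:(lra) Hsq).
    apply (weps_gt_finite u e t x _ Hlt) in Hu. lra.
  - apply weps_lt_finite in Hw1. exact Hw1.
Qed.

Lemma close_to_vertex L kap t1 x1 t0 x0 : 0 <= L -> 0 < kap ->
  Rabs (t1 - t0) < kap / (2 * (L + 1)) -> Rabs (x1 - x0) < kap / (2 * (L + 1)) ->
  L * (Rabs (t1 - t0) + Rabs (x1 - x0)) <= kap.
Proof.
  intros HL Hk Ht Hx. pose proof (Rabs_pos (t1 - t0)). pose proof (Rabs_pos (x1 - x0)).
  apply Rle_trans with ((L + 1) * (2 * (kap / (2 * (L + 1)))));
    [apply Rmult_le_compat; lra | right; field; lra].
Qed.

(** Viscosity subsolution inequality at a contact point where w^* is finite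
    and positive: otherwise, at the penalized maximum of
    approximate_test_inequality, u^e is exponentially small, v^e <= chi_le + eta
    by (3.1), and the Hamiltonian inequality fails. *)
Lemma subsolution_test d r a b c1 ct1 u0 v0 u v (wstar : R -> R -> Rbar) phi phit phix t0 x0 W rho :
  0 < a -> is_solution_11 d r a b u0 v0 u v -> cond31 v c1 ct1 ->
  (forall t x, 0 <= t -> hr_limsup (weps u) t x (wstar t x)) ->
  C1_test phi phit phix -> 0 < t0 -> 0 < rho ->
  (forall t x, 0 < t -> Rabs (t - t0) < rho -> Rabs (x - x0) < rho ->
     Rbar_le (wstar t x) (Rbar_addr (wstar t0 x0) (phi t x - phi t0 x0))) ->
  wstar t0 x0 = Finite W -> 0 < W ->
  phit t0 x0 + (phix t0 x0 * phix t0 x0 + 1 - a * chi_le c1 t0 x0) <= 0.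
Proof.
  intros Ha Hs Hc31 Hws HC1 Ht0 Hrho Htouch HW HW0.
  destruct (solution_u_facts _ _ _ _ _ _ _ _ Hs) as [B [ut [ux [uxx [_ [_ [_ [[Hcu [_ [_ [_ Hder]]]] Heq]]]]]]]].
  set (p := phit t0 x0). set (q := phix t0 x0). set (chi := chi_le c1 t0 x0).
  set (P := p + (q * q + 1 - a * chi)).
  destruct (Rle_or_lt P 0) as [HP|HP]; [exact HP | exfalso].
  destruct (eta_choice P q a HP ltac:(lra)) as [eta [[Heta Heta1] HetaP]].
  destruct (v_eventual_bounds d r a b u0 v0 u v c1 ct1 t0 x0 Hs Hc31 Ht0 eta Heta) as [[dv [Hdv Hv]] _].
  destruct (C1_linearization phi phit phix t0 x0 HC1 Ht0 eta Heta) as [r1 [Hr1 [Hr1t Hlin]]].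
  set (L := Rabs p + Rabs q + 3 * eta).
  assert (HL : 0 <= L) by (unfold L; pose proof (Rabs_pos p); pose proof (Rabs_pos q); lra).
  (* the square of radius rr: inside the touching, linearization and (3.1) ranges, and with
     (L + 1) rr <= W / 64 so that u^e is exponentially small at the penalized maximum *)
  destruct (exists_pos_below4 rho r1 dv (W / (64 * (L + 1))) Hrho Hr1 Hdv
    ltac:(apply Rdiv_lt_0_compat; lra)) as [rr [Hrr [Hrrho [Hrr1 [Hrrv HrrW]]]]].
  assert (HLrr : (L + 1) * rr <= W / 64).
  { apply Rle_trans with ((L + 1) * (W / (64 * (L + 1)))); [apply Rmult_le_compat_l; lra | right; field; lra]. }
  set (kap := eta * rr / 8). assert (Hkap : 0 < kap) by (unfold kap; nra).
  set (eU := W / (2 * (Rabs (ln (P / 4)) + 1))).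
  set (d3 := P / 4 * (rr / 48) / (Rabs (1 * (3 * eta)) + 1)).
  destruct (exists_pos_below4 (kap / (2 * (L + 1))) eU d3 rr ltac:(apply Rdiv_lt_0_compat; lra)
    ltac:(unfold eU; pose proof (Rabs_pos (ln (P / 4))); apply Rdiv_lt_0_compat; lra)
    ltac:(unfold d3; pose proof (Rabs_pos (1 * (3 * eta))); apply Rdiv_lt_0_compat; nra) Hrr)
    as [delta [Hdelta [Hd1 [Hd2 [Hd3 Hd4]]]]].
  assert (Hcone := touch_cone_above wstar phi t0 x0 W rho eta r1 p q rr Hrrho Hrr1 ltac:(lra) HW Htouch Hlin).
  destruct (upper_localization u wstar W p q eta t0 x0 rr kap delta Hrr ltac:(lra) Hkap Hdelta ltac:(lra)
    Hws HW Hcone) as [e [t1 [x1 [He [Ht1 [Hx1 [Hbox Hw1]]]]]]].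
  assert (Hsq1 : square t0 x0 rr t1 x1) by (apply square_abs; lra).
  destruct (approximate_test_inequality a e u v ut ux uxx 1 p q eta W t0 x0 rr (P / 4) t1 x1
    (or_introl eq_refl) (proj1 He) Hcu Hder Heq Heta Hrr ltac:(lra) ltac:(lra) ltac:(unfold d3 in Hd3; lra))
    as [ts [xs [Hts [Hxs [HUs [Hlog Hham]]]]]].
  - intros t x Hsq. unfold resc in Hbox. rewrite !Rmult_1_l. split; intros _; apply (Hbox t x Hsq).
  - exact Hsq1.
  - apply (close_to_vertex L kap); lra.
  - exact (proj1 (Hbox t1 x1 Hsq1)).
  - unfold resc in Hw1. fold kap. lra.
  - assert (HU : u (ts / e) (xs / e) < P / 4).
    { apply (small_of_neg_log e _ (P / 4) W (proj1 He) HUs ltac:(lra) ltac:(unfold eU in Hd2; lra)).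
      assert (eta * rr <= (L + 1) * rr) by (unfold L; pose proof (Rabs_pos p); pose proof (Rabs_pos q); nra).
      fold L in Hlog. lra. }
    assert (HV : v (ts / e) (xs / e) < chi + eta).
    { apply (Hv e ts xs). unfold near. pose proof (Rabs_def2 _ _ Hts). repeat split; lra. }
    assert (a * v (ts / e) (xs / e) <= a * (chi + eta)) by (apply Rmult_le_compat_l; lra).
    assert (3 * eta * (1 + 2 * Rabs q + 3 * eta) <= (12 + 6 * Rabs q) * eta) by (pose proof (Rabs_pos q); nra).
    unfold P in *. lra.
Qed.

(** Viscosity supersolution inequality at a contact point where w_* is finite:
    otherwise, at the penalized minimum of approximate_test_inequality,
    u^e >= 0 and v^e >= chi_between - eta by (3.1) contradict it. *)
Lemma supersolution_test d r a b c1 ct1 u0 v0 u v (wlow : R -> R -> Rbar) phi phit phix t0 x0 W rho :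
  0 < a -> is_solution_11 d r a b u0 v0 u v -> cond31 v c1 ct1 ->
  (forall t x, 0 <= t -> hr_liminf (weps u) t x (wlow t x)) ->
  C1_test phi phit phix -> 0 < t0 -> 0 < rho ->
  (forall t x, 0 < t -> Rabs (t - t0) < rho -> Rabs (x - x0) < rho ->
     Rbar_le (Rbar_addr (wlow t0 x0) (phi t x - phi t0 x0)) (wlow t x)) ->
  wlow t0 x0 = Finite W ->
  0 <= phit t0 x0 + (phix t0 x0 * phix t0 x0 + 1 - a * chi_between ct1 c1 t0 x0).
Proof.
  intros Ha Hs Hc31 Hwl HC1 Ht0 Hrho Htouch HW.
  destruct (solution_u_facts _ _ _ _ _ _ _ _ Hs) as [B [ut [ux [uxx [_ [_ [_ [[Hcu [_ [_ [_ Hder]]]] Heq]]]]]]]].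
  set (p := phit t0 x0). set (q := phix t0 x0). set (chi := chi_between ct1 c1 t0 x0).
  set (P := - (p + (q * q + 1 - a * chi))).
  destruct (Rle_or_lt P 0) as [HP|HP]; [unfold P in HP; lra | exfalso].
  destruct (eta_choice P q a HP ltac:(lra)) as [eta [[Heta Heta1] HetaP]].
  destruct (v_eventual_bounds d r a b u0 v0 u v c1 ct1 t0 x0 Hs Hc31 Ht0 eta Heta) as [_ [dv [Hdv Hv]]].
  destruct (C1_linearization phi phit phix t0 x0 HC1 Ht0 eta Heta) as [r1 [Hr1 [Hr1t Hlin]]].
  set (L := Rabs p + Rabs q + 3 * eta).
  assert (HL : 0 <= L) by (unfold L; pose proof (Rabs_pos p); pose proof (Rabs_pos q); lra).
  destruct (exists_pos_below3 rho r1 dv Hrho Hr1 Hdv) as [rr [Hrr [Hrrho [Hrr1 Hrrv]]]].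
  set (kap := eta * rr / 8). assert (Hkap : 0 < kap) by (unfold kap; nra).
  set (d3 := P / 4 * (rr / 48) / (Rabs (-1 * (3 * eta)) + 1)).
  destruct (exists_pos_below3 (kap / (2 * (L + 1))) d3 rr ltac:(apply Rdiv_lt_0_compat; lra)
    ltac:(unfold d3; pose proof (Rabs_pos (-1 * (3 * eta))); apply Rdiv_lt_0_compat; nra) Hrr)
    as [delta [Hdelta [Hd1 [Hd3 Hd4]]]].
  assert (Hcone := touch_cone_below wlow phi t0 x0 W rho eta r1 p q rr Hrrho Hrr1 ltac:(lra) HW Htouch Hlin).
  destruct (lower_localization u wlow W p q eta t0 x0 rr kap delta Hrr ltac:(lra) Hkap Hdelta ltac:(lra)
    Hwl HW Hcone) as [e [t1 [x1 [He [Ht1 [Hx1 [Hbox [Hu1 Hw1]]]]]]]].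
  destruct (approximate_test_inequality a e u v ut ux uxx (-1) p q eta W t0 x0 rr (P / 4) t1 x1
    (or_intror eq_refl) (proj1 He) Hcu Hder Heq Heta Hrr ltac:(lra) ltac:(lra) ltac:(unfold d3 in Hd3; lra))
    as [ts [xs [Hts [Hxs [HUs [_ Hham]]]]]].
  - intros t x Hsq. split; [intro Habs; lra|]. intros Hu.
    specialize (Hbox t x Hsq Hu). unfold resc in Hbox. replace (-1 * eta) with (- eta) by ring. fold kap. lra.
  - apply square_abs; lra.
  - apply (close_to_vertex L kap); lra.
  - exact Hu1.
  - unfold resc in Hw1. fold kap. lra.
  - assert (HV : chi - eta < v (ts / e) (xs / e)).
    { apply (Hv e ts xs). unfold near. pose proof (Rabs_def2 _ _ Hts). repeat split; lra. }
    assert (a * (chi - eta) <= a * v (ts / e) (xs / e)) by (apply Rmult_le_compat_l; lra).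
    assert (3 * eta * (1 + 2 * Rabs q + 3 * eta) <= (12 + 6 * Rabs q) * eta) by (pose proof (Rabs_pos q); nra).
    unfold P in *. lra.
Qed.

Theorem lemma3p4 (d r a b c1 ct1 : R) (u0 v0 : R -> R) (u v : R -> R -> R)
    (wstar wlow : R -> R -> Rbar) :
  0 < d -> 0 < r -> 0 < a < 1 -> 0 < b < 1 ->
  H_inf u0 v0 ->
  is_solution_11 d r a b u0 v0 u v ->
  2 <= ct1 -> ct1 < c1 ->
  cond31 v c1 ct1 ->
  (forall t x, 0 <= t -> hr_limsup (weps u) t x (wstar t x)) ->
  (forall t x, 0 <= t -> hr_liminf (weps u) t x (wlow t x)) ->
  (usc_on_closed_half wstar /\ visc_subsol (H1 a c1) wstar) /\
  (lsc_on_closed_half wlow /\ visc_supersol (H2 a c1 ct1) wlow) /\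
  (forall x, x < 0 -> wstar 0 x = Finite 0 /\ wlow 0 x = Finite 0) /\
  (forall x, 0 < x -> wlow 0 x = p_infty).
Proof.
  intros _ _ [Ha _] _ Hi Hs _ _ Hc31 Hws Hwl.
  assert (Hfin : forall (w : R -> R -> Rbar) t0 x0, 0 < t0 ->
      (forall M, ev_lt (weps u) t0 x0 M -> Rbar_le (w t0 x0) (Finite M)) ->
      (forall M, ev_gt (weps u) t0 x0 M -> Rbar_le (Finite M) (w t0 x0)) ->
      exists W, w t0 x0 = Finite W /\ 0 <= W).
  { intros w t0 x0 Ht0 Hle Hge.
    destruct (weps_eventually_bounded d r a b u0 v0 u v Ha Hi Hs t0 x0 Ht0) as [Mb HMb].
    apply (finite_nonneg_of_bounds _ Mb (Hle Mb HMb)).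
    intros k Hk. apply Hge, (weps_eventually_above d r a b u0 v0 u v Hs), Hk. }
  split; [split | split; [split | exact (initial_values d r a b u0 v0 u v Ha Hi Hs wstar wlow Hws Hwl)]].
  - exact (usc_of_limsup _ _ Hws).
  - intros phi phit phix t0 x0 HC1 Ht0 [rho [Hrho Htouch]].
    destruct (Hfin wstar t0 x0 Ht0) as [W [HW _]].
    + intro M. apply limsup_le, Hws. lra.
    + intro M. apply limsup_ge; [lra | apply Hws; lra].
    + destruct (Rle_or_lt W 0) as [HW1|HW1]; [right; rewrite HW; simpl; exact HW1 | left].
      unfold H1. replace (phix t0 x0 ^ 2) with (phix t0 x0 * phix t0 x0) by ring.
      exact (subsolution_test d r a b c1 ct1 u0 v0 u v wstar phi phit phix t0 x0 W rho
        Ha Hs Hc31 Hws HC1 Ht0 Hrho Htouch HW HW1).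
  - exact (lsc_of_liminf _ _ Hwl).
  - intros phi phit phix t0 x0 HC1 Ht0 [rho [Hrho Htouch]].
    destruct (Hfin wlow t0 x0 Ht0) as [W [HW HW0]].
    + intro M. apply liminf_le; [lra | apply Hwl; lra].
    + intro M. apply liminf_ge, Hwl. lra.
    + split; [|rewrite HW; exact HW0].
      unfold H2. replace (phix t0 x0 ^ 2) with (phix t0 x0 * phix t0 x0) by ring.
      exact (supersolution_test d r a b c1 ct1 u0 v0 u v wlow phi phit phix t0 x0 W rho
        Ha Hs Hc31 Hwl HC1 Ht0 Hrho Htouch HW).
Qed.
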